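(* Let $2\le n\le+\infty$ and let $\{a_i\}_{i=1}^n$ be a non-increasing $n$-tuple of positive numbers with $\sum_{i=1}^n a_i\le1$ and $\sum_{i=1}^n\eta(a_i)<+\infty$. Let $I_n=\mathbb{N}\cap[1,n]$, $d_k=\sum_{i=k+1}^n a_i$, $s_k=\sum_{i=k+1}^n\eta(a_i)$ for $k\in\{0\}\cup I_{n-1}$, $b_k=s_{k-1}+d_{k-1}\ln a_k$ for $k\in I_n$ (so $b_n=0$ if $n<\infty$). Define $z_0(0)=n$ and, for $b>0$, $$z_0(b)=\sum_{k=1}^{n-1}\mathbf{1}_{B'_k}(b)\left(k+d_ke^{\frac{s_k-b}{d_k}}\right),\quad B'_1=[b_2,+\infty),\ B'_k=[b_{k+1},b_k)\ (k\in I_{n-1}\setminus\{1\}).$$ For $b>0$ let $\bar{x}^b=\{x^b_i\}_{i=1}^n$ be the unique minimizer of $\sum_{i=1}^n e^{-bx_i}$ over the set of nondecreasing $n$-tuples $\{x_i\}$ of reals with $x_1=0$ and $\sum_{i=1}^n a_ix_i=1$ (so that $z_0(b)$ is the minimum value). Let $\theta>0$, $f(b)=\theta b+\ln z_0(b)$, and $$m=1\ \text{if}\ \theta<1/d_0,\qquad m=\max\{k\in I_{n-1}:\ d_k+ka_k\ge1/\theta\}\ \text{if}\ \theta\ge1/d_0.$$ (i) If $n<+\infty$: $f$ is positive, convex and continuously differentiable on $[0,+\infty)$; $f(0)=\ln n$, $f'(0^+)=\theta-\frac{1}{a_nn}$ and $\lim_{b\to+\infty}f(b)=+\infty$; and $\inf_{b\in[0,+\infty)}f(b)=f(b_*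 )$, where $b_*$ is the unique point of $[0,+\infty)$ at which the infimum is attained, given by: in case $A$ ($a_nn\ge1/\theta$), $b_*=0$ and $f(b_* )=\ln n$; in case $B$ ($a_nn<1/\theta$), $b_*=s_m+d_m\ln\frac{1-\theta d_m}{\theta m}$ and $f(b_* )=b_*\theta+\ln\frac{m}{1-d_m\theta}$. In case $A$, $\lim_{b\to0^+}x^b_i=0$ for $1\le i\le\tilde m$ and $\lim_{b\to0^+}x^b_i=\frac{1}{a_n(n-\tilde m)}$ for $\tilde m<i\le n$, where $\tilde m=n-\max\{k\in\mathbb{N}\cap[1,n-1]:a_{n-k+1}=a_n\}$. In case $B$, $x^{b_*}_i=0$ for $1\le i\le m$ and $x^{b_*}_i=\frac{1}{b_*}\ln\frac{1-\theta d_m}{a_i\theta m}$ for $m<i\le n$. (ii) If $n=+\infty$: $f$ is positive, convex and continuously differentiable on $(0,+\infty)$; $\lim_{b\to0^+}f(b)=+\infty$, $\lim_{b\to0^+}f'(b)=-\infty$, $\lim_{b\to+\infty}f(b)=+\infty$; $\inf_{b\in(0,+\infty)}f(b)=f(b_* )$ with $b_*=s_m+d_m\ln\frac{1-\theta d_m}{\theta m}$ the unique point of $[0,+\infty)$ where the infimum is attained (with $f(0)=+\infty$), and $$f(b_* )=\theta s_m+\eta(1-\theta d_m)+(1-\theta d_m)\ln m+d_m\eta(\theta).$$ Moreover $x^{b_*}_i=0$ for $1\le i\le m$, $x^{b_*}_i=\frac{1}{b_*}\ln\frac{1-\theta d_m}{a_i\theta m}$ for $i>m$, and $$\sum_{i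=1}^{+\infty}x^{b_*}_ie^{-b_*x^{b_*}_i}=\theta\sum_{i=1}^{+\infty}e^{-b_*x^{b_*}_i}.$$
   Context: $\eta(x)=-x\ln x$ for $x>0$, $\eta(0)=0$. An $n$-tuple with $n=+\infty$ means a sequence. $\mathbf{1}_B$ is the indicator function of $B$; $f'(0^+)$ is the right derivative at $0$. *)

From Stdlib Require Import Reals Lra Lia.
From Coquelicot Require Import Coquelicot.
Open Scope R_scope.

Definition eta (x : R) : R := if Rlt_dec 0 x then - x * ln x else 0.

Definition convex_on (D : R -> Prop) (f : R -> R) : Prop :=
  forall x y t, D x -> D y -> 0 <= t <= 1 ->
    f (t * x + (1 - t) * y) <= t * f x + (1 - t) * f y.

Definition bk (a d s : nat -> R) (k : nat) : R :=
  s (k - 1)%nat + d (k - 1)%nat * ln (a k).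

Definition indB (a d s : nat -> R) (k : nat) (b : R) : R :=
  if Nat.eqb k 1 then (if Rle_dec (bk a d s 2) b then 1 else 0)
  else if Rle_dec (bk a d s (k + 1)) b then
         (if Rlt_dec b (bk a d s k) then 1 else 0)
       else 0.

Definition z0_term (a d s : nat -> R) (b : R) (k : nat) : R :=
  indB a d s k b * (INR k + d k * exp ((s k - b) / d k)).

Definition dF (n : nat) (a : nat -> R) (k : nat) : R := sum_n_m a (k + 1) n.
Definition sF (n : nat) (a : nat -> R) (k : nat) : R :=
  sum_n_m (fun i => eta (a i)) (k + 1) n.

Definition z0F (n : nat) (a : nat -> R) (b : R) : R :=
  if Req_EM_T b 0 then INR n
  else sum_n_m (z0_term a (dF n a) (sF n a) b) 1 (n - 1).

Definition fF (n : nat) (a : nat -> R) (theta b : R) : R :=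
  theta * b + ln (z0F n a b).

Definition feasibleF (n : nat) (a x : nat -> R) : Prop :=
  x 1%nat = 0 /\ (forall i, (1 <= i < n)%nat -> x i <= x (i + 1)%nat) /\
  sum_n_m (fun i => a i * x i) 1 n = 1.

Definition objF (n : nat) (b : R) (x : nat -> R) : R :=
  sum_n_m (fun i => exp (- b * x i)) 1 n.

Definition minimizerF (n : nat) (a : nat -> R) (b : R) (x : nat -> R) : Prop :=
  feasibleF n a x /\ forall y, feasibleF n a y -> objF n b x <= objF n b y.

Definition is_mF (n : nat) (a : nat -> R) (theta : R) (m : nat) : Prop :=
  (theta < 1 / dF n a 0 /\ m = 1%nat) \/
  (1 / dF n a 0 <= theta /\ (1 <= m <= n - 1)%nat /\
   dF n a m + INR m * a m >= 1 / theta /\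
   forall k, (1 <= k <= n - 1)%nat -> dF n a k + INR k * a k >= 1 / theta ->
     (k <= m)%nat).

Definition is_mtilde (n : nat) (a : nat -> R) (mt : nat) : Prop :=
  exists K, (1 <= K <= n - 1)%nat /\ a (n - K + 1)%nat = a n /\
    (forall k, (1 <= k <= n - 1)%nat -> a (n - k + 1)%nat = a n -> (k <= K)%nat) /\
    mt = (n - K)%nat.

Definition dI (a : nat -> R) (k : nat) : R := Series (fun j => a (k + 1 + j)%nat).
Definition sI (a : nat -> R) (k : nat) : R :=
  Series (fun j => eta (a (k + 1 + j)%nat)).

Definition z0I (a : nat -> R) (b : R) : R :=
  Series (fun j => z0_term a (dI a) (sI a) b (j + 1)%nat).

Definition fI (a : nat -> R) (theta b : R) : R := theta * b + ln (z0I a b).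

Definition feasibleI (a x : nat -> R) : Prop :=
  x 1%nat = 0 /\ (forall i, (1 <= i)%nat -> x i <= x (i + 1)%nat) /\
  is_series (fun j => a (j + 1)%nat * x (j + 1)%nat) 1.

Definition objI_terms (b : R) (x : nat -> R) : nat -> R :=
  fun j => exp (- b * x (j + 1)%nat).

(* minimizer of sum e^{-b x_i} (a series of positive terms; a divergent
   series is +oo and is never smaller) *)
Definition minimizerI (a : nat -> R) (b : R) (x : nat -> R) : Prop :=
  feasibleI a x /\ ex_series (objI_terms b x) /\
  forall y, feasibleI a y -> ex_series (objI_terms b y) ->
    Series (objI_terms b x) <= Series (objI_terms b y).

Definition is_mI (a : nat -> R) (theta : R) (m : nat) : Prop :=
  (theta < 1 / dI a 0 /\ m = 1%nat) \/
  (1 / dI a 0 <= theta /\ (1 <= m)%nat /\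
   dI a m + INR m * a m >= 1 / theta /\
   forall k, (1 <= k)%nat -> dI a k + INR k * a k >= 1 / theta -> (k <= m)%nat).

(* For [b > 0] the minimizer is explicit.  There is a unique level [c = c(b)] with
   [Phi c := sum_(i >= 2) a_i ln (max(c, a_i) / a_i) = b]; then
   [x_i = ln (max(c, a_i) / a_i) / b] for [i >= 2] and [z_0(b) = 1 + sum_(i >= 2) a_i / max(c, a_i)].
   Optimality, and the regularity of [z_0], both come from one inequality: on [z >= 0],
   [e^(-z)] lies above the line of slope [- a_i / c] through the optimal coordinate.
   Squeezing [z_0] between this line and its value at a perturbed minimizer gives
   [z_0'(b) = - 1 / c(b)], so [f'(b) = theta - 1 / Psi (c(b))] with
   [Psi c = c z_0 = c + sum_(i >= 2) min(c, a_i)].  Both [Psi] and [b |-> c(b)] are increasing,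
   so [f] is convex, and it is minimal where [Psi (c(b)) = 1 / theta]; on the piece [B'_m] this
   level is [(1 - theta d_m) / (theta m)], which yields [b_*]. *)

From Stdlib Require Import Reals Lra Lia.
From Coquelicot Require Import Coquelicot.
Open Scope R_scope.

(* Coquelicot states its sums in [AbelianMonoid.sort R_AbelianMonoid]; this
   exposes the carrier [R] so that [ring] and [lra] apply. *)
Ltac change_eq_R := match goal with |- @eq _ ?x ?y => change (@eq R x y) end.

(** * Elementary facts, finite sums and one-sided limits *)

Lemma exp_le_compat x y : x <= y -> exp x <= exp y.
Proof. intros [H|H]. left; apply exp_increasing; auto. subst; lra. Qed.

Lemma exp_neg_ln_ratio M x : 0 < x -> 0 < M -> exp (- ln (M / x)) = x / M.
Proof.
  intros. rewrite exp_Ropp, exp_ln. field. split; lra. apply Rdiv_lt_0_compat; auto.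
Qed.

Lemma Rmax_ratio_ge1 c x : 0 < x -> 1 <= Rmax c x / x.
Proof.
  intros. apply Rcomplements.Rle_div_r; auto. rewrite Rmult_1_l. apply Rmax_r.
Qed.

Lemma Rmax_pos_r c x : 0 < x -> 0 < Rmax c x.
Proof. intros. apply Rlt_le_trans with x; auto. apply Rmax_r. Qed.

Lemma Rge_inv_iff th X : 0 < th -> (X >= 1 / th <-> 1 <= th * X).
Proof.
  intros Hth. split; intros H.
  - apply Rge_le in H. apply Rmult_le_compat_l with (r := th) in H; [|lra].
    replace (th * (1 / th)) with 1 in H by (field; lra). lra.
  - apply Rle_ge. apply Rmult_le_reg_l with th; auto.
    replace (th * (1 / th)) with 1 by (field; lra). lra.
Qed.

Lemma Rlt_inv_iff th X : 0 < th -> (X < 1 / th <-> th * X < 1).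
Proof.
  intros Hth. split; intros H.
  - apply Rmult_lt_compat_l with (r := th) in H; [|lra].
    replace (th * (1 / th)) with 1 in H by (field; lra). lra.
  - apply Rmult_lt_reg_l with th; auto. replace (th * (1 / th)) with 1 by (field; lra). lra.
Qed.

Lemma sub_inv_pos th P : 0 < th -> 1 / th < P -> 0 < th - / P.
Proof.
  intros Hth HP. assert (0 < 1 / th) by (apply Rdiv_lt_0_compat; lra).
  assert (Hinv : / P < / (1 / th)) by (apply Rinv_lt_contravar; [apply Rmult_lt_0_compat|]; lra).
  replace (/ (1 / th)) with th in Hinv by (field; lra). lra.
Qed.

Lemma sub_inv_neg th P : 0 < th -> 0 < P -> P < 1 / th -> th - / P < 0.
Proof.
  intros Hth HP0 HP.
  assert (Hinv : / (1 / th) < / P) by (apply Rinv_lt_contravar; [apply Rmult_lt_0_compat|]; lra).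
  replace (/ (1 / th)) with th in Hinv by (field; lra). lra.
Qed.

Lemma eta_pos x : 0 < x -> eta x = - x * ln x.
Proof. intros. unfold eta. destruct (Rlt_dec 0 x); [reflexivity|lra]. Qed.

Lemma eta_nonneg x : 0 < x <= 1 -> 0 <= eta x.
Proof.
  intros Hx. rewrite eta_pos by lra. assert (ln x <= 0) by (rewrite <- ln_1; apply ln_le; lra). nra.
Qed.

Lemma sum_n_m_le_loc (f g : nat -> R) (p q : nat) :
  (forall k, (p <= k <= q)%nat -> f k <= g k) -> sum_n_m f p q <= sum_n_m g p q.
Proof.
  intros H.
  rewrite (sum_n_m_ext_loc f (fun k => if andb (Nat.leb p k) (Nat.leb k q) then f k else 0)).
  2:{ intros k [H1 H2]. apply Nat.leb_le in H1, H2. rewrite H1, H2. reflexivity. }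
  rewrite (sum_n_m_ext_loc g (fun k => if andb (Nat.leb p k) (Nat.leb k q) then g k else 0)).
  2:{ intros k [H1 H2]. apply Nat.leb_le in H1, H2. rewrite H1, H2. reflexivity. }
  apply sum_n_m_le. intros k.
  destruct (Nat.leb p k) eqn:E1; destruct (Nat.leb k q) eqn:E2; simpl; try lra.
  apply H. apply Nat.leb_le in E1, E2. lia.
Qed.

Lemma sum_n_m_zero_loc (f : nat -> R) (p q : nat) :
  (forall k, (p <= k <= q)%nat -> f k = 0) -> sum_n_m f p q = 0.
Proof.
  intros H. rewrite (sum_n_m_ext_loc f (fun _ => zero)) by (intros k Hk; rewrite H; auto).
  exact (sum_n_m_const_zero (G := R_AbelianMonoid) p q).
Qed.

Lemma sum_n_m_single (f : nat -> R) (p q j : nat) :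
  (p <= j <= q)%nat -> (forall k, (p <= k <= q)%nat -> k <> j -> f k = 0) ->
  sum_n_m f p q = f j.
Proof.
  revert j. induction q as [|q IH]; intros j Hj H.
  - assert (p = 0 /\ j = 0)%nat as [-> ->] by lia. apply sum_n_n.
  - rewrite sum_n_Sm by lia. destruct (Nat.eq_dec j (S q)) as [->|Hne].
    + rewrite sum_n_m_zero_loc by (intros k Hk; apply H; lia). unfold plus; simpl. ring.
    + rewrite (IH j) by (try lia; intros; apply H; lia).
      rewrite (H (S q)) by lia. unfold plus; simpl. ring.
Qed.

Lemma sum_n_m_nonneg (f : nat -> R) (p q : nat) :
  (forall k, (p <= k <= q)%nat -> 0 <= f k) -> 0 <= sum_n_m f p q.
Proof.
  intros H. replace 0 with (sum_n_m (fun _ => 0) p q)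
    by exact (sum_n_m_const_zero (G := R_AbelianMonoid) p q).
  apply sum_n_m_le_loc. exact H.
Qed.

Lemma sum_n_m_ge_term (f : nat -> R) (p q j : nat) :
  (p <= j <= q)%nat -> (forall k, (p <= k <= q)%nat -> 0 <= f k) ->
  f j <= sum_n_m f p q.
Proof.
  intros Hj H.
  assert (E : sum_n_m (fun k => if Nat.eqb k j then f j else 0) p q = f j).
  { rewrite (sum_n_m_single _ p q j Hj), Nat.eqb_refl; [reflexivity|].
    intros k _ Hkj. apply Nat.eqb_neq in Hkj. rewrite Hkj. reflexivity. }
  rewrite <- E. apply sum_n_m_le_loc. intros k Hk.
  destruct (Nat.eqb k j) eqn:Ekj.
  - apply Nat.eqb_eq in Ekj. subst. lra.
  - apply H; auto.
Qed.

Lemma sum_n_m_pos (f : nat -> R) (p q : nat) :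
  (p <= q)%nat -> (forall k, (p <= k <= q)%nat -> 0 < f k) -> 0 < sum_n_m f p q.
Proof.
  intros Hpq H. apply Rlt_le_trans with (f p). apply H; lia.
  apply sum_n_m_ge_term. lia. intros k Hk. left. apply H; auto.
Qed.

Lemma sum_n_m_plus_R (f g : nat -> R) p q :
  sum_n_m (fun k => f k + g k) p q = sum_n_m f p q + sum_n_m g p q.
Proof. apply (sum_n_m_plus f g p q). Qed.

Lemma sum_n_m_scal_R (c : R) (f : nat -> R) p q :
  sum_n_m (fun k => c * f k) p q = c * sum_n_m f p q.
Proof. apply (sum_n_m_mult_l c f p q). Qed.

Lemma sum_n_m_minus_R (f g : nat -> R) p q :
  sum_n_m (fun k => f k - g k) p q = sum_n_m f p q - sum_n_m g p q.
Proof.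
  change_eq_R.
  rewrite (sum_n_m_ext _ (fun k => f k + (-1) * g k)) by (intros; change_eq_R; ring).
  rewrite sum_n_m_plus_R, sum_n_m_scal_R. ring.
Qed.

Lemma sum_n_m_first (f : nat -> R) p q : (p <= q)%nat ->
  sum_n_m f p q = f p + sum_n_m f (S p) q.
Proof. intros. rewrite sum_Sn_m by auto. reflexivity. Qed.

Lemma sum_n_m_last (f : nat -> R) p q : (p <= S q)%nat ->
  sum_n_m f p (S q) = sum_n_m f p q + f (S q).
Proof. intros. rewrite sum_n_Sm by auto. reflexivity. Qed.

Lemma sum_n_m_split (f : nat -> R) p m q : (p <= S m)%nat -> (m <= q)%nat ->
  sum_n_m f p q = sum_n_m f p m + sum_n_m f (S m) q.
Proof. intros. rewrite (sum_n_m_Chasles f p m q) by auto. reflexivity. Qed.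

Lemma is_derive_sum_n_m (F : nat -> R -> R) (l : nat -> R) x p q :
  (forall i, (p <= i <= q)%nat -> is_derive (F i) x (l i)) ->
  is_derive (fun t => sum_n_m (fun i => F i t) p q) x (sum_n_m l p q).
Proof.
  induction q as [|q IH]; intros H.
  - destruct p.
    + rewrite sum_n_n. apply (is_derive_ext (F 0%nat)).
      { intros; rewrite sum_n_n; auto. }
      apply H; lia.
    + rewrite sum_n_m_zero by lia.
      apply (is_derive_ext (fun _ => 0)); [intros; rewrite sum_n_m_zero by lia; auto|].
      apply is_derive_Reals, derivable_pt_lim_const.
  - destruct (Compare_dec.le_lt_dec p (S q)) as [Hp|Hp].
    + rewrite sum_n_m_last by auto.
      apply (is_derive_ext (fun t => sum_n_m (fun i => F i t) p q + F (S q) t)).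
      { intros; rewrite sum_n_m_last by auto; auto. }
      apply (is_derive_plus (fun t => sum_n_m (fun i => F i t) p q) (F (S q))).
      * apply IH; intros; apply H; lia.
      * apply H; lia.
    + rewrite sum_n_m_zero by lia.
      apply (is_derive_ext (fun _ => 0)); [intros; rewrite sum_n_m_zero by lia; auto|].
      apply is_derive_Reals, derivable_pt_lim_const.
Qed.

Definition right_limit (g : R -> R) (x L : R) : Prop :=
  forall eps, 0 < eps -> exists d, 0 < d /\ forall t, x < t < x + d -> Rabs (g t - L) < eps.

Lemma filterlim_at_right_of_right_limit (g : R -> R) x L :
  right_limit g x L -> filterlim g (at_right x) (locally L).
Proof.
  intros H. apply filterlim_locally. intros eps.
  destruct (H eps (cond_pos eps)) as [d [Hd Hd2]].
  exists (mkposreal d Hd). intros t Ht Hxt. simpl in Ht.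
  unfold ball in *; simpl in *; unfold AbsRing_ball, abs, minus, plus, opp in *; simpl in *.
  apply Hd2. split; auto. unfold Rabs in Ht. destruct (Rcase_abs _); lra.
Qed.

Lemma right_limit_of_continuity_pt (f : R -> R) x : continuity_pt f x -> right_limit f x (f x).
Proof.
  intros Hc eps Heps. destruct (Hc eps Heps) as [d [Hd Hd2]].
  exists d. split; auto. intros t Ht. apply (Hd2 t). split. split. constructor. lra.
  simpl. unfold R_dist. rewrite Rabs_right; lra.
Qed.

Lemma right_limit_ext (g g' : R -> R) x L : (forall t, x < t -> g t = g' t) ->
  right_limit g x L -> right_limit g' x L.
Proof.
  intros E H eps Heps. destruct (H eps Heps) as [d [Hd Hd2]].
  exists d. split; auto. intros t Ht. rewrite <- E by lra. auto.
Qed.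

Lemma right_limit_of_eventually_eq (g : R -> R) x L :
  (exists d, 0 < d /\ forall t, x < t < x + d -> g t = L) -> right_limit g x L.
Proof.
  intros [d [Hd E]] eps Heps. exists d. split; auto. intros t Ht.
  rewrite E, Rminus_diag, Rabs_R0 by auto. auto.
Qed.

Lemma right_limit_squeeze (g lo up : R -> R) x L d0 : 0 < d0 ->
  lo x = L -> up x = L -> continuity_pt lo x -> continuity_pt up x ->
  (forall t, x < t < x + d0 -> lo t <= g t <= up t) -> right_limit g x L.
Proof.
  intros Hd0 E1 E2 C1 C2 B eps Heps.
  destruct (C1 eps Heps) as [d1 [Hd1 H1]]. destruct (C2 eps Heps) as [d2 [Hd2 H2]].
  exists (Rmin d0 (Rmin d1 d2)). split; [repeat apply Rmin_pos; auto|].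
  intros t [Ht0 Ht].
  pose proof (Rmin_l d0 (Rmin d1 d2)). pose proof (Rmin_r d0 (Rmin d1 d2)).
  pose proof (Rmin_l d1 d2). pose proof (Rmin_r d1 d2).
  assert (Hx : D_x no_cond x t) by (split; [constructor|lra]).
  assert (Hdt1 : dist R_met t x < d1) by (simpl; unfold R_dist; rewrite Rabs_right; lra).
  assert (Hdt2 : dist R_met t x < d2) by (simpl; unfold R_dist; rewrite Rabs_right; lra).
  specialize (H1 t (conj Hx Hdt1)). specialize (H2 t (conj Hx Hdt2)).
  simpl in H1, H2. unfold R_dist in *. rewrite E1 in H1. rewrite E2 in H2.
  destruct (B t) as [B1 B2]. lra.
  apply Rabs_def2 in H1. apply Rabs_def2 in H2. apply Rabs_def1; lra.
Qed.

Lemma right_derivative_squeeze (g lo up : R -> R) x L d0 : 0 < d0 ->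
  lo x = g x -> up x = g x -> derivable_pt_lim lo x L -> derivable_pt_lim up x L ->
  (forall h, 0 < h < d0 -> lo (x + h) <= g (x + h) <= up (x + h)) ->
  right_limit (fun h => (g (x + h) - g x) / h) 0 L.
Proof.
  intros Hd0 E1 E2 D1 D2 B eps Heps.
  destruct (D1 eps Heps) as [d1 H1]. destruct (D2 eps Heps) as [d2 H2].
  exists (Rmin d0 (Rmin d1 d2)). split; [apply Rmin_pos; auto; apply Rmin_pos; apply cond_pos|].
  intros h [Hh0 Hh]. rewrite Rplus_0_l in Hh.
  pose proof (Rmin_l d0 (Rmin d1 d2)). pose proof (Rmin_r d0 (Rmin d1 d2)).
  pose proof (Rmin_l d1 d2). pose proof (Rmin_r d1 d2).
  assert (Hn0 : h <> 0) by lra.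
  specialize (H1 h Hn0 ltac:(rewrite Rabs_right; lra)).
  specialize (H2 h Hn0 ltac:(rewrite Rabs_right; lra)).
  rewrite E1 in H1. rewrite E2 in H2. destruct (B h) as [B1 B2]. lra.
  assert ((lo (x + h) - g x) / h <= (g (x + h) - g x) / h).
  { unfold Rdiv. apply Rmult_le_compat_r. left; apply Rinv_0_lt_compat; auto. lra. }
  assert ((g (x + h) - g x) / h <= (up (x + h) - g x) / h).
  { unfold Rdiv. apply Rmult_le_compat_r. left; apply Rinv_0_lt_compat; auto. lra. }
  apply Rabs_def2 in H1. apply Rabs_def2 in H2. apply Rabs_def1; lra.
Qed.

Lemma right_limit_of_right_derivative (g : R -> R) x L :
  right_limit (fun h => (g (x + h) - g x) / h) 0 L -> right_limit g x (g x).
Proof.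
  intros H eps Heps. destruct (H 1 Rlt_0_1) as [d [Hd Hd2]].
  set (K := Rabs L + 1).
  assert (HK : 0 < K) by (unfold K; pose proof (Rabs_pos L); lra).
  exists (Rmin d (eps / K)). split. apply Rmin_pos; auto. apply Rdiv_lt_0_compat; auto.
  intros t [Ht0 Ht].
  pose proof (Rmin_l d (eps / K)). pose proof (Rmin_r d (eps / K)).
  specialize (Hd2 (t - x) ltac:(lra)). replace (x + (t - x)) with t in Hd2 by ring.
  set (q := (g t - g x) / (t - x)) in *.
  replace (g t - g x) with (q * (t - x)) by (unfold q; field; lra).
  rewrite Rabs_mult, (Rabs_right (t - x)) by lra.
  assert (Rabs q < K).
  { unfold K. pose proof (Rabs_triang (q - L) L).
    replace (q - L + L) with q in * by ring. lra. }
  apply Rle_lt_trans with (K * (t - x)). apply Rmult_le_compat_r; lra.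
  apply Rmult_lt_reg_r with (/ K). apply Rinv_0_lt_compat; auto.
  replace (K * (t - x) * / K) with (t - x) by (field; lra).
  replace (eps * / K) with (eps / K) by reflexivity. lra.
Qed.

Lemma continuity_pt_of_ex_derive (f : R -> R) x : ex_derive f x -> continuity_pt f x.
Proof. intros H. apply continuity_pt_filterlim. apply (ex_derive_continuous f x H). Qed.

Lemma continuity_pt_lipschitz (g : R -> R) x d0 K : 0 < d0 -> 0 <= K ->
  (forall y, Rabs (y - x) < d0 -> Rabs (g y - g x) <= K * Rabs (y - x)) -> continuity_pt g x.
Proof.
  intros Hd0 HK Hl eps Heps. exists (Rmin d0 (eps / (K + 1))). split.
  apply Rmin_pos; auto. apply Rdiv_lt_0_compat; lra.
  intros y [_ Hy]. simpl in *. unfold R_dist in *.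
  assert (Hy1 : Rabs (y - x) < d0) by (eapply Rlt_le_trans; [apply Hy|apply Rmin_l]).
  assert (Hy2 : Rabs (y - x) < eps / (K + 1)) by (eapply Rlt_le_trans; [apply Hy|apply Rmin_r]).
  specialize (Hl y Hy1). apply Rle_lt_trans with (K * Rabs (y - x)); auto.
  apply Rle_lt_trans with (K * (eps / (K + 1))).
  apply Rmult_le_compat_l; auto. left; auto.
  apply Rmult_lt_reg_r with (K + 1). lra.
  replace (K * (eps / (K + 1)) * (K + 1)) with (K * eps) by (field; lra). nra.
Qed.

Lemma derivable_pt_lim_loc_eq (f g : R -> R) x l d :
  0 < d -> (forall y, Rabs (y - x) < d -> f y = g y) ->
  derivable_pt_lim f x l -> derivable_pt_lim g x l.
Proof.
  intros Hd Heq Hf eps Heps. destruct (Hf eps Heps) as [e He].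
  assert (Hm : 0 < Rmin e d) by (apply Rmin_pos; [apply cond_pos|auto]).
  exists (mkposreal _ Hm). intros h Hh0 Hh. simpl in Hh.
  pose proof (Rmin_l e d). pose proof (Rmin_r e d).
  rewrite <- (Heq (x + h)) by (replace (x + h - x) with h by ring; lra).
  rewrite <- (Heq x) by (replace (x - x) with 0 by ring; rewrite Rabs_R0; auto).
  apply He; auto. lra.
Qed.

Lemma continuity_pt_loc_eq (f g : R -> R) x d :
  0 < d -> (forall y, Rabs (y - x) < d -> f y = g y) ->
  continuity_pt f x -> continuity_pt g x.
Proof.
  intros Hd Heq Hf eps Heps. destruct (Hf eps Heps) as [e [He1 He2]].
  exists (Rmin e d). split. apply Rmin_pos; auto.
  intros y [Hy1 Hy2]. simpl in *. unfold R_dist in *.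
  pose proof (Rmin_l e d). pose proof (Rmin_r e d).
  rewrite <- (Heq y) by lra.
  rewrite <- (Heq x) by (replace (x - x) with 0 by ring; rewrite Rabs_R0; auto).
  apply He2. split; auto. lra.
Qed.

Lemma mean_value_open (f df : R -> R) a b : a < b ->
  (forall c, a < c < b -> derivable_pt_lim f c (df c)) ->
  (forall c, a <= c <= b -> continuity_pt f c) ->
  exists c, a < c < b /\ f b - f a = df c * (b - a).
Proof.
  intros Hab Hd Hc.
  set (pr1 := fun c (P : a < c < b) => exist (fun l => derivable_pt_abs f c l) (df c) (Hd c P)).
  set (pr2 := fun c (P : a < c < b) => derivable_pt_id c).
  destruct (MVT f id a b pr1 pr2 Hab Hc (fun c _ => derivable_continuous_pt _ _ (derivable_pt_id c)))
    as [c [P Heq]].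
  exists c. split; auto.
  unfold pr1, pr2 in Heq. rewrite derive_pt_id in Heq.
  replace (derive_pt f c _) with (df c) in Heq by (unfold derive_pt; reflexivity).
  unfold id in Heq. lra.
Qed.

Lemma mean_value_right_cont (f df : R -> R) a b : a < b ->
  (forall c, a < c < b -> derivable_pt_lim f c (df c)) ->
  (forall c, a < c <= b -> continuity_pt f c) ->
  right_limit f a (f a) ->
  exists c, a < c < b /\ f b - f a = df c * (b - a).
Proof.
  intros Hab Hd Hc Hr.
  set (g := fun t => f (Rmax a t)).
  assert (Hga : g a = f a) by (unfold g; rewrite Rmax_left; lra).
  assert (Hgb : g b = f b) by (unfold g; rewrite Rmax_right; lra).
  assert (Hloc : forall c y, a < c -> Rabs (y - c) < c - a -> f y = g y).
  { intros c y Hc0 Hy. unfold g. rewrite Rmax_right; auto.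
    unfold Rabs in Hy; destruct (Rcase_abs _); lra. }
  destruct (mean_value_open g df a b Hab) as [c [Hc1 Hc2]].
  - intros c Hc1. apply (derivable_pt_lim_loc_eq f g c (df c) (c - a)); [lra| |apply Hd; auto].
    intros y; apply Hloc; lra.
  - intros c [Hc1 Hc2]. destruct (Req_dec c a) as [->|Hne].
    + intros eps Heps. destruct (Hr eps Heps) as [d [Hd0 Hd1]].
      exists d. split; auto. intros y [_ Hy]. simpl in *. unfold R_dist in *.
      unfold g. rewrite (Rmax_left a a) by lra.
      destruct (Rle_dec y a).
      * rewrite Rmax_left by auto. replace (f a - f a) with 0 by ring. rewrite Rabs_R0; lra.
      * rewrite Rmax_right by lra. apply Hd1. unfold Rabs in Hy; destruct (Rcase_abs _); lra.
    + apply (continuity_pt_loc_eq f g c (c - a)); [lra| |apply Hc; lra].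
      intros y; apply Hloc; lra.
  - exists c. split; auto. rewrite <- Hga, <- Hgb. auto.
Qed.

Lemma convex_combination_le_of_deriv (f df : R -> R) x y t :
  x < y -> 0 <= t <= 1 ->
  (forall c, x < c < y -> derivable_pt_lim f c (df c)) ->
  (forall c, x < c <= y -> continuity_pt f c) ->
  right_limit f x (f x) ->
  (forall u v, x < u -> u <= v -> v < y -> df u <= df v) ->
  f (t * x + (1 - t) * y) <= t * f x + (1 - t) * f y.
Proof.
  intros Hxy Ht Hd Hc Hr Hm.
  destruct (Req_dec t 0) as [->|Ht0].
  { replace (0 * x + (1 - 0) * y) with y by ring. lra. }
  destruct (Req_dec t 1) as [->|Ht1].
  { replace (1 * x + (1 - 1) * y) with x by ring. lra. }
  set (z := t * x + (1 - t) * y).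
  assert (Hz1 : x < z) by (unfold z; nra).
  assert (Hz2 : z < y) by (unfold z; nra).
  destruct (mean_value_right_cont f df x z Hz1) as [c1 [Hc1 E1]];
    [intros; apply Hd; lra | intros; apply Hc; lra | auto |].
  destruct (mean_value_open f df z y Hz2) as [c2 [Hc2 E2]];
    [intros; apply Hd; lra | intros; apply Hc; lra |].
  assert (df c1 <= df c2) by (apply Hm; lra).
  assert (Ez1 : z - x = (1 - t) * (y - x)) by (unfold z; ring).
  assert (Ez2 : y - z = t * (y - x)) by (unfold z; ring).
  rewrite Ez1 in E1. rewrite Ez2 in E2.
  assert (t * f x + (1 - t) * f y - f z = t * (1 - t) * (y - x) * (df c2 - df c1)).
  { replace (t * f x + (1 - t) * f y - f z) with (- t * (f z - f x) + (1 - t) * (f y - f z))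
      by ring.
    rewrite E1, E2. ring. }
  assert (0 <= t * (1 - t) * (y - x) * (df c2 - df c1)).
  { apply Rmult_le_pos; [apply Rmult_le_pos|]; nra. }
  fold z. lra.
Qed.

Lemma convex_on_of_deriv_nondecreasing (D : R -> Prop) (f df : R -> R) :
  (forall x c, D x -> x < c -> derivable_pt_lim f c (df c)) ->
  (forall x c, D x -> x < c -> continuity_pt f c) ->
  (forall x, D x -> right_limit f x (f x)) ->
  (forall x u v, D x -> x < u -> u <= v -> df u <= df v) ->
  convex_on D f.
Proof.
  intros Hd Hc Hr Hm.
  assert (Hlt : forall x y t, D x -> x < y -> 0 <= t <= 1 ->
    f (t * x + (1 - t) * y) <= t * f x + (1 - t) * f y).
  { intros x y t Hx Hxy Ht. apply (convex_combination_le_of_deriv f df); auto.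
    - intros c Hc'. apply (Hd x); auto; lra.
    - intros c Hc'. apply (Hc x); auto; lra.
    - intros u v Hu Huv _. apply (Hm x); auto. }
  intros x y t Hx Hy Ht. destruct (Rtotal_order x y) as [Hl|[He|Hg]].
  - apply Hlt; auto.
  - subst y. replace (t * x + (1 - t) * x) with x by ring. lra.
  - replace (t * x + (1 - t) * y) with ((1 - t) * y + (1 - (1 - t)) * x) by ring.
    replace (t * f x + (1 - t) * f y) with ((1 - t) * f y + (1 - (1 - t)) * f x) by ring.
    apply Hlt; auto; lra.
Qed.

Lemma strict_min_of_deriv_sign (D : R -> Prop) (f df : R -> R) bs :
  (forall x y, D x -> x < y -> exists xi, x < xi < y /\ f y - f x = df xi * (y - x)) ->
  (forall x xi, D x -> x < xi < bs -> df xi < 0) ->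
  (forall xi, bs < xi -> 0 < df xi) ->
  D bs -> forall b, D b -> b <> bs -> f bs < f b.
Proof.
  intros Hmvt Hneg Hpos Hbs b Hb Hne. destruct (Rtotal_order b bs) as [Hl|[He|Hg]].
  - destruct (Hmvt b bs Hb Hl) as [xi [Hxi E]].
    assert (df xi < 0) by (apply (Hneg b); auto). nra.
  - contradiction.
  - destruct (Hmvt bs b Hbs Hg) as [xi [Hxi E]].
    assert (0 < df xi) by (apply Hpos; lra). nra.
Qed.

Lemma strict_min_le (D : R -> Prop) (f : R -> R) bs :
  (forall b, D b -> b <> bs -> f bs < f b) -> forall b, D b -> f bs <= f b.
Proof.
  intros H b Hb. destruct (Req_dec b bs) as [->|Hne]; [lra|]. left; apply H; auto.
Qed.

Lemma strict_min_unique (D : R -> Prop) (f : R -> R) bs :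
  (forall b, D b -> b <> bs -> f bs < f b) -> forall b, D b -> f b = f bs -> b = bs.
Proof.
  intros H b Hb E. destruct (Req_dec b bs) as [->|Hne]; auto. specialize (H b Hb Hne). lra.
Qed.

Lemma derivable_pt_lim_squeeze (g phi : R -> R) x l d0 :
  0 < d0 -> phi x = g x -> derivable_pt_lim phi x l ->
  (forall y, Rabs (y - x) < d0 -> g x + l * (y - x) <= g y /\ g y <= phi y) ->
  derivable_pt_lim g x l.
Proof.
  intros Hd0 Heq Hphi Hb eps Heps.
  destruct (Hphi eps Heps) as [d Hd].
  assert (Hm : 0 < Rmin d d0) by (apply Rmin_pos; [apply cond_pos|auto]).
  exists (mkposreal _ Hm). intros h Hh0 Hh. simpl in Hh.
  pose proof (Rmin_l d d0). pose proof (Rmin_r d d0).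
  specialize (Hd h Hh0 ltac:(lra)).
  destruct (Hb (x + h)) as [B1 B2]; [replace (x + h - x) with h by ring; lra|].
  replace (x + h - x) with h in B1 by ring.
  rewrite Heq in Hd.
  destruct (Rlt_or_le 0 h) as [Hp|Hn].
  - assert (l <= (g (x + h) - g x) / h).
    { apply Rmult_le_reg_r with h; auto. unfold Rdiv. rewrite Rmult_assoc, Rinv_l by lra. lra. }
    assert ((g (x + h) - g x) / h <= (phi (x + h) - g x) / h).
    { unfold Rdiv. apply Rmult_le_compat_r. left; apply Rinv_0_lt_compat; auto. lra. }
    apply Rabs_def2 in Hd. destruct Hd. apply Rabs_def1; lra.
  - assert (Hn' : h < 0) by lra.
    assert ((g (x + h) - g x) / h <= l).
    { apply Rmult_le_reg_r with (- h). lra. unfold Rdiv.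
      replace ((g (x + h) - g x) * / h * - h) with (- (g (x + h) - g x)) by (field; lra). nra. }
    assert ((phi (x + h) - g x) / h <= (g (x + h) - g x) / h).
    { unfold Rdiv. assert (/ h < 0) by (apply Rinv_lt_0_compat; auto). nra. }
    apply Rabs_def2 in Hd. destruct Hd. apply Rabs_def1; lra.
Qed.

Lemma derivable_pt_lim_affine_ln (z : R -> R) th b l : 0 < z b -> derivable_pt_lim z b l ->
  derivable_pt_lim (fun t => th * t + ln (z t)) b (th + l / z b).
Proof.
  intros Hz Hd.
  apply (derivable_pt_lim_plus (fun t => th * t) (comp ln z)).
  - apply is_derive_Reals. auto_derive; auto. ring.
  - replace (l / z b) with (/ z b * l) by (unfold Rdiv; ring).
    apply derivable_pt_lim_comp; auto. apply derivable_pt_lim_ln; auto.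
Qed.

Lemma filterlim_affine_ln_p_infty (z : R -> R) th : 0 < th ->
  (forall b, 0 < b -> 1 <= z b) ->
  filterlim (fun b => th * b + ln (z b)) (Rbar_locally p_infty) (Rbar_locally p_infty).
Proof.
  intros Hth Hz P [M HM]. exists (Rmax 0 (M / th)). intros b Hb. apply HM.
  assert (Hb0 : 0 < b) by (eapply Rle_lt_trans; [apply Rmax_l|apply Hb]).
  assert (Hb1 : M / th < b) by (eapply Rle_lt_trans; [apply Rmax_r|apply Hb]).
  assert (0 <= ln (z b)) by (rewrite <- ln_1; apply ln_le; [lra|apply Hz; auto]).
  assert (M < th * b).
  { apply Rmult_lt_compat_l with (r := th) in Hb1; auto.
    replace (th * (M / th)) with M in Hb1 by (field; lra). lra. }
  lra.
Qed.

(** * Levels *)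

(* For [z >= 0], [exp (- z)] lies above the line of slope [- a / c] through the
   point [z = ln (max c a / a)]; when [a <= c] this line is the tangent there. *)
Definition tangent_gap (a c z : R) : R :=
  exp (- z) - a / Rmax c a + a / c * (z - ln (Rmax c a / a)).

Lemma tangent_gap_nonneg ai c z : 0 < ai -> 0 < c -> 0 <= z -> 0 <= tangent_gap ai c z.
Proof.
  intros Ha Hc Hz. unfold tangent_gap. destruct (Rle_dec ai c) as [Hle|Hlt].
  - rewrite Rmax_left by auto.
    assert (Ey : exp (- ln (c / ai)) = ai / c) by (apply exp_neg_ln_ratio; lra).
    set (y := ln (c / ai)) in *.
    assert (E : exp (- z) = exp (- y) * exp (- (z - y))) by (rewrite <- exp_plus; f_equal; ring).
    rewrite Ey in E.
    pose proof (exp_ineq1_le (- (z - y))).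
    assert (0 < ai / c) by (apply Rdiv_lt_0_compat; lra).
    rewrite E. nra.
  - rewrite Rmax_right by lra. replace (ai / ai) with 1 by (field; lra). rewrite ln_1.
    pose proof (exp_ineq1_le (- z)).
    assert (1 <= ai / c) by (apply Rcomplements.Rle_div_r; lra).
    nra.
Qed.

Lemma tangent_gap_pos ai c z : 0 < ai -> 0 < c -> 0 <= z -> z <> ln (Rmax c ai / ai) ->
  0 < tangent_gap ai c z.
Proof.
  intros Ha Hc Hz Hne. unfold tangent_gap. destruct (Rle_dec ai c) as [Hle|Hlt].
  - rewrite Rmax_left in * by auto.
    assert (Ey : exp (- ln (c / ai)) = ai / c) by (apply exp_neg_ln_ratio; lra).
    set (y := ln (c / ai)) in *.
    assert (E : exp (- z) = exp (- y) * exp (- (z - y))) by (rewrite <- exp_plus; f_equal; ring).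
    rewrite Ey in E.
    pose proof (exp_ineq1 (- (z - y)) ltac:(lra)).
    assert (0 < ai / c) by (apply Rdiv_lt_0_compat; lra).
    rewrite E. nra.
  - rewrite Rmax_right in * by lra. replace (ai / ai) with 1 in * by (field; lra).
    rewrite ln_1 in *.
    pose proof (exp_ineq1 (- z) ltac:(lra)).
    assert (1 <= ai / c) by (apply Rcomplements.Rle_div_r; lra).
    nra.
Qed.

Section Levels.

Variable a : nat -> R.

Definition level (c : R) (i : nat) : R := ln (Rmax c (a i) / a i).
Definition phi_term (c : R) (i : nat) : R := a i * level c i.
Definition zeta_term (c : R) (i : nat) : R := a i / Rmax c (a i).
Definition level_point (c b : R) (i : nat) : R :=
  if Nat.eqb i 1 then 0 else level c i / b.

Variables (c : R) (i : nat).
Hypothesis (Hai : 0 < a i).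

Lemma level_nonneg : 0 <= level c i.
Proof. unfold level. rewrite <- ln_1. apply ln_le. lra. apply Rmax_ratio_ge1; auto. Qed.

Lemma level_of_le : c <= a i -> level c i = 0.
Proof.
  intros H. unfold level. rewrite Rmax_right by auto.
  replace (a i / a i) with 1 by (field; lra). apply ln_1.
Qed.

Lemma level_of_ge : a i <= c -> level c i = ln (c / a i).
Proof. intros H. unfold level. rewrite Rmax_left by auto. reflexivity. Qed.

Lemma exp_neg_level : exp (- level c i) = zeta_term c i.
Proof. apply exp_neg_ln_ratio; auto. apply Rmax_pos_r; auto. Qed.

Lemma zeta_term_of_le : c <= a i -> zeta_term c i = 1.
Proof. intros H. unfold zeta_term. rewrite Rmax_right by auto. field. lra. Qed.

Lemma zeta_term_of_ge : a i <= c -> zeta_term c i = / c * a i.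
Proof.
  intros H. unfold zeta_term. rewrite Rmax_left by auto. unfold Rdiv. ring.
Qed.

Lemma zeta_term_bounds : 0 < c -> 0 <= zeta_term c i <= Rmin 1 (/ c * a i).
Proof.
  intros Hc. unfold zeta_term. split.
  - left. apply Rdiv_lt_0_compat; auto. apply Rmax_pos_r; auto.
  - apply Rmin_glb.
    + apply Rcomplements.Rle_div_l. apply Rmax_pos_r; auto. rewrite Rmult_1_l. apply Rmax_r.
    + unfold Rdiv. rewrite Rmult_comm. apply Rmult_le_compat_r. lra.
      apply Rinv_le_contravar; auto. apply Rmax_l.
Qed.

Lemma phi_term_nonneg : 0 <= phi_term c i.
Proof. unfold phi_term. pose proof level_nonneg. apply Rmult_le_pos; lra. Qed.

Lemma phi_term_le : 0 < c -> a i <= 1 -> phi_term c i <= Rabs (ln c) * a i + eta (a i).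
Proof.
  intros Hc Ha1. pose proof (eta_nonneg (a i) ltac:(lra)).
  assert (0 <= Rabs (ln c) * a i) by (apply Rmult_le_pos; [apply Rabs_pos|lra]).
  unfold phi_term. destruct (Rle_dec c (a i)) as [Hle|Hlt].
  - rewrite level_of_le by auto. lra.
  - rewrite level_of_ge by lra. rewrite eta_pos by lra. rewrite ln_div by lra.
    assert (ln c <= Rabs (ln c)) by apply Rle_abs. nra.
Qed.

Lemma phi_term_le_mono c' : 0 < c -> c <= c' -> phi_term c i <= phi_term c' i.
Proof.
  intros Hc Hcc. unfold phi_term, level. apply Rmult_le_compat_l. lra.
  apply ln_le. apply Rdiv_lt_0_compat; auto. apply Rmax_pos_r; auto.
  unfold Rdiv. apply Rmult_le_compat_r. left; apply Rinv_0_lt_compat; auto.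
  apply Rle_max_compat_r; auto.
Qed.

Lemma scaled_zeta_term_le_mono c' : 0 < c -> c <= c' -> c * zeta_term c i <= c' * zeta_term c' i.
Proof.
  intros Hc Hcc. unfold zeta_term, Rmax.
  destruct (Rle_dec c (a i)); destruct (Rle_dec c' (a i)).
  - replace (c * (a i / a i)) with c by (field; lra).
    replace (c' * (a i / a i)) with c' by (field; lra). lra.
  - replace (c * (a i / a i)) with c by (field; lra).
    replace (c' * (a i / c')) with (a i) by (field; lra). lra.
  - lra.
  - replace (c * (a i / c)) with (a i) by (field; lra).
    replace (c' * (a i / c')) with (a i) by (field; lra). lra.
Qed.

Lemma level_mul_zeta_term : 0 < c -> level c i * zeta_term c i = / c * phi_term c i.
Proof.
  intros Hc. unfold phi_term, zeta_term, level, Rmax. destruct (Rle_dec c (a i)).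
  - replace (a i / a i) with 1 by (field; lra). rewrite ln_1. ring.
  - field. lra.
Qed.

Lemma tangent_gap_split z :
  tangent_gap (a i) c z = (exp (- z) - zeta_term c i) + / c * (a i * z - phi_term c i).
Proof. unfold tangent_gap, zeta_term, phi_term, level. unfold Rdiv. ring. Qed.

End Levels.

Lemma level_antitone (a : nat -> R) c i j : 0 < a j -> a j <= a i -> level a c i <= level a c j.
Proof.
  intros Hj Hji. unfold level. apply ln_le.
  { apply Rdiv_lt_0_compat; [apply Rmax_pos_r|]; lra. }
  unfold Rmax. destruct (Rle_dec c (a i)); destruct (Rle_dec c (a j)).
  - replace (a i / a i) with 1 by (field; lra). replace (a j / a j) with 1 by (field; lra). lra.
  - replace (a i / a i) with 1 by (field; lra). apply Rcomplements.Rle_div_r; lra.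
  - lra.
  - unfold Rdiv. apply Rmult_le_compat_l; [lra|]. apply Rinv_le_contravar; lra.
Qed.

Lemma level_point_of_le (a : nat -> R) c b i : 0 < a i -> c <= a i -> level_point a c b i = 0.
Proof.
  intros Hai Hc. unfold level_point. destruct (Nat.eqb i 1); [reflexivity|].
  rewrite level_of_le by auto. unfold Rdiv. ring.
Qed.

Lemma level_point_of_ge (a : nat -> R) c b i : (i <> 1)%nat -> 0 < a i -> a i <= c ->
  level_point a c b i = ln (c / a i) / b.
Proof.
  intros Hi Hai Hc. unfold level_point. apply Nat.eqb_neq in Hi. rewrite Hi.
  rewrite level_of_ge by auto. reflexivity.
Qed.

Lemma level_point_scaled (a : nat -> R) c b i : (i <> 1)%nat -> 0 < b ->
  b * level_point a c b i = level a c i.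
Proof.
  intros Hi Hb. unfold level_point. apply Nat.eqb_neq in Hi. rewrite Hi. field. lra.
Qed.

(** * Tails of series *)

Lemma ex_series_zero : ex_series (fun _ : nat => 0).
Proof.
  exists 0. unfold is_series. apply (filterlim_ext (fun _ => 0)); [|apply filterlim_const].
  intros n. unfold sum_n. symmetry. exact (sum_n_m_const_zero (G := R_AbelianMonoid) 0 n).
Qed.

Lemma Series_zero : Series (fun _ => 0) = 0.
Proof.
  unfold Series. rewrite (Lim_seq_ext _ (fun _ => 0)), Lim_seq_const; [reflexivity|].
  intros n. unfold sum_n. exact (sum_n_m_const_zero (G := R_AbelianMonoid) 0 n).
Qed.

Lemma Series_nonneg (u : nat -> R) : (forall n, 0 <= u n) -> ex_series u -> 0 <= Series u.
Proof.
  intros H He. rewrite <- Series_zero. apply Series_le; auto. intros; split; [lra|auto].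
Qed.

Lemma Series_le_R (u v : nat -> R) : (forall n, u n <= v n) -> ex_series u -> ex_series v ->
  Series u <= Series v.
Proof.
  intros H Hu Hv. assert (Hdiff : 0 <= Series (fun n => v n - u n)).
  { apply Series_nonneg. intros n; specialize (H n); lra. apply (ex_series_minus v u Hv Hu). }
  rewrite Series_minus in Hdiff by auto. lra.
Qed.

Lemma ex_series_finite_support (u : nat -> R) N : (forall j, (N <= j)%nat -> u j = 0) ->
  ex_series u.
Proof.
  intros H. apply (ex_series_incr_n _ N). apply (ex_series_ext (fun _ => 0)); [|apply ex_series_zero].
  intros k. symmetry; apply H; lia.
Qed.

Notation ex_tail f p := (ex_series (fun j => f (p + j)%nat)).

Definition Tail (f : nat -> R) (p : nat) : R := Series (fun j => f (p + j)%nat).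

Lemma ex_tail_shift (f : nat -> R) p q : (p <= q)%nat -> ex_tail f p -> ex_tail f q.
Proof.
  intros Hpq H. replace q with (p + (q - p))%nat by lia.
  apply (ex_series_incr_n _ (q - p)) in H.
  apply (ex_series_ext _ _ (fun n => f_equal f (Nat.add_assoc p (q - p) n))) in H. auto.
Qed.

Lemma ex_tail_le (f g : nat -> R) p : (forall i, (p <= i)%nat -> 0 <= f i <= g i) ->
  ex_tail g p -> ex_tail f p.
Proof.
  intros H Hg. apply (ex_series_le (fun j => f (p + j)%nat) (fun j => g (p + j)%nat)); auto.
  intros j.
  specialize (H (p + j)%nat ltac:(lia)).
  change (norm (f (p + j)%nat)) with (Rabs (f (p + j)%nat)). rewrite Rabs_right; lra.
Qed.

Lemma ex_series_of_tail1 (g : nat -> R) : ex_tail g 1 <-> ex_series (fun j => g (j + 1)%nat).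
Proof. split; apply ex_series_ext; intros; f_equal; lia. Qed.

Lemma Series_shift1 (g : nat -> R) : Series (fun j => g (j + 1)%nat) = Tail g 1.
Proof. unfold Tail. apply Series_ext. intros; f_equal; lia. Qed.

Lemma Tail_first (f : nat -> R) p : ex_tail f p -> Tail f p = f p + Tail f (S p).
Proof.
  intros H. unfold Tail. rewrite Series_incr_1 by auto. rewrite Nat.add_0_r. f_equal.
  apply Series_ext. intros n. f_equal. lia.
Qed.

Lemma Tail_split (f : nat -> R) p q : (p <= S q)%nat -> ex_tail f p ->
  Tail f p = sum_n_m f p q + Tail f (S q).
Proof.
  intros Hpq H. induction q as [|q IH].
  - destruct p as [|p].
    + rewrite sum_n_n. apply Tail_first; auto.
    + assert (p = 0)%nat by lia. subst. rewrite sum_n_m_zero by lia.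
      change (@zero R_AbelianMonoid) with 0. ring.
  - destruct (Nat.eq_dec p (S (S q))) as [->|Hne].
    + rewrite sum_n_m_zero by lia. change (@zero R_AbelianMonoid) with 0. ring.
    + rewrite IH by lia. rewrite sum_n_m_last by lia.
      rewrite (Tail_first f (S q)) by (apply (ex_tail_shift f p); auto; lia). ring.
Qed.

Lemma Tail_nonneg (f : nat -> R) p : (forall i, (p <= i)%nat -> 0 <= f i) -> ex_tail f p ->
  0 <= Tail f p.
Proof. intros H He. apply Series_nonneg; auto. intros; apply H; lia. Qed.

Lemma Tail_ge_term (f : nat -> R) p i : (p <= i)%nat -> (forall k, (p <= k)%nat -> 0 <= f k) ->
  ex_tail f p -> f i <= Tail f p.
Proof.
  intros Hi H He.
  rewrite (Tail_split f p i) by (auto; lia).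
  assert (0 <= Tail f (S i)).
  { apply Tail_nonneg. intros; apply H; lia. apply (ex_tail_shift f p); auto; lia. }
  assert (f i <= sum_n_m f p i) by (apply sum_n_m_ge_term; [lia|intros; apply H; lia]).
  lra.
Qed.

Lemma Tail_le (f g : nat -> R) p : (forall i, (p <= i)%nat -> f i <= g i) ->
  ex_tail f p -> ex_tail g p -> Tail f p <= Tail g p.
Proof. intros H Hf Hg. apply Series_le_R; auto. intros; apply H; lia. Qed.

Lemma Tail_plus (f g : nat -> R) p : ex_tail f p -> ex_tail g p ->
  Tail (fun i => f i + g i) p = Tail f p + Tail g p.
Proof. intros. unfold Tail. apply Series_plus; auto. Qed.

Lemma Tail_minus (f g : nat -> R) p : ex_tail f p -> ex_tail g p ->
  Tail (fun i => f i - g i) p = Tail f p - Tail g p.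
Proof. intros. unfold Tail. apply Series_minus; auto. Qed.

Lemma Tail_scal (c : R) (f : nat -> R) p : Tail (fun i => c * f i) p = c * Tail f p.
Proof. unfold Tail. apply Series_scal_l. Qed.

Lemma Tail_ext_loc (f g : nat -> R) p : (forall i, (p <= i)%nat -> f i = g i) ->
  Tail f p = Tail g p.
Proof. intros H. unfold Tail. apply Series_ext. intros; apply H; lia. Qed.

Lemma Tail_small (f : nat -> R) : ex_series f ->
  forall eps, 0 < eps -> exists N, forall p, (N <= p)%nat -> Rabs (Tail f p) < eps.
Proof.
  intros He eps Heps.
  assert (He0 : ex_tail f 0) by (apply (ex_series_ext f); auto).
  assert (Hc : is_lim_seq (sum_n (fun j => f (0 + j)%nat)) (Tail f 0))
    by (apply Series_correct; auto).
  apply is_lim_seq_spec in Hc. destruct (Hc (mkposreal eps Heps)) as [N HN].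
  exists (S N). intros p Hp.
  assert (E : Tail f 0 = sum_n_m f 0 (p - 1) + Tail f p).
  { rewrite (Tail_split f 0 (p - 1)) by (auto; lia). replace (S (p - 1)) with p by lia. reflexivity. }
  specialize (HN (p - 1)%nat ltac:(lia)).
  change (Rabs (sum_n (fun j => f (0 + j)%nat) (p - 1) - Tail f 0) < eps) in HN.
  unfold sum_n in HN. rewrite E in HN.
  replace (sum_n_m (fun j => f (0 + j)%nat) 0 (p - 1)) with (sum_n_m f 0 (p - 1)) in HN
    by (apply sum_n_m_ext; reflexivity).
  replace (Tail f p) with (- (sum_n_m f 0 (p - 1) - (sum_n_m f 0 (p - 1) + Tail f p))) by ring.
  rewrite Rabs_Ropp. auto.
Qed.

Lemma Series_single (u : nat -> R) j0 : (forall j, j <> j0 -> u j = 0) -> Series u = u j0.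
Proof.
  intros H.
  assert (Hex : ex_tail u 0)
    by (apply (ex_series_finite_support _ (S j0)); intros; apply H; lia).
  change (Series u) with (Tail u 0). rewrite (Tail_split u 0 j0) by (auto; lia).
  rewrite (sum_n_m_single u 0 j0 j0) by (try lia; intros; apply H; auto).
  rewrite (Tail_ext_loc u (fun _ => 0)) by (intros; apply H; lia). unfold Tail.
  rewrite Series_zero. ring.
Qed.

Lemma Tail_update (f : nat -> R) p i0 (v : R) : (p <= i0)%nat -> ex_tail f p ->
  let g := fun i => if Nat.eqb i i0 then v else f i in
  ex_tail g p /\ Tail g p = Tail f p - f i0 + v.
Proof.
  intros Hp He g.
  set (d := fun j => if Nat.eqb (p + j) i0 then v - f i0 else 0).
  assert (Hd : forall j, j <> (i0 - p)%nat -> d j = 0).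
  { intros j Hj. unfold d. destruct (Nat.eqb (p + j) i0) eqn:E; auto.
    apply Nat.eqb_eq in E. lia. }
  assert (Sd : Series d = v - f i0).
  { rewrite (Series_single d (i0 - p)) by auto. unfold d.
    replace (p + (i0 - p))%nat with i0 by lia. rewrite Nat.eqb_refl. reflexivity. }
  assert (Ed : ex_series d) by (apply (ex_series_finite_support _ (S (i0 - p))); intros; apply Hd; lia).
  assert (Eq : forall j, g (p + j)%nat = f (p + j)%nat + d j).
  { intros j. unfold g, d. destruct (Nat.eqb (p + j) i0) eqn:E; [|ring].
    apply Nat.eqb_eq in E. rewrite <- E. ring. }
  split.
  - apply (ex_series_ext (fun j => f (p + j)%nat + d j)); [intros; rewrite Eq; auto|].
    apply (ex_series_plus _ _ He Ed).
  - unfold Tail. rewrite (Series_ext _ (fun j => f (p + j)%nat + d j)) by (intros; apply Eq).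
    rewrite Series_plus by auto. rewrite Sd. ring.
Qed.

(** * Finite tuples *)

Module Finite.
Section FiniteTuple.

Variables (n : nat) (a : nat -> R).
Hypothesis n_ge2 : (2 <= n)%nat.
Hypothesis a_pos : forall i, (1 <= i <= n)%nat -> 0 < a i.
Hypothesis a_step : forall i, (1 <= i < n)%nat -> a (i + 1)%nat <= a i.

Definition Phi (c : R) : R := sum_n_m (phi_term a c) 2 n.
Definition Zeta (c : R) : R := sum_n_m (zeta_term a c) 2 n.
Definition Psi (c : R) : R := c * (1 + Zeta c).
Definition breakpoint (k : nat) : R := sF n a k + dF n a k * ln (a k).
Definition is_level (b c : R) : Prop := a n <= c /\ Phi c = b /\ z0F n a b = 1 + Zeta c.

Lemma a_antitone i j : (1 <= i <= j)%nat -> (j <= n)%nat -> a j <= a i.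
Proof.
  intros Hij Hjn. induction j as [|j IH]; [lia|].
  destruct (Nat.eq_dec i (S j)) as [->|Hne]; [lra|].
  apply Rle_trans with (a j); [|apply IH; lia].
  replace (S j) with (j + 1)%nat by lia. apply a_step; lia.
Qed.

Lemma an_pos : 0 < a n.
Proof. apply a_pos; lia. Qed.

Lemma dF_pred k : (1 <= k <= n)%nat -> dF n a (k - 1) = a k + dF n a k.
Proof.
  intros Hk. unfold dF. replace (k - 1 + 1)%nat with k by lia. change_eq_R.
  rewrite sum_n_m_first by lia. replace (k + 1)%nat with (S k) by lia. reflexivity.
Qed.

Lemma sF_pred k : (1 <= k <= n)%nat -> sF n a (k - 1) = eta (a k) + sF n a k.
Proof.
  intros Hk. unfold sF. replace (k - 1 + 1)%nat with k by lia. change_eq_R.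
  rewrite (sum_n_m_first (fun i => eta (a i))) by lia.
  replace (k + 1)%nat with (S k) by lia. reflexivity.
Qed.

Lemma dF_pos k : (k < n)%nat -> 0 < dF n a k.
Proof. intros Hk. unfold dF. apply sum_n_m_pos; [lia|]. intros; apply a_pos; lia. Qed.

Lemma dF_nonneg k : 0 <= dF n a k.
Proof. unfold dF. apply sum_n_m_nonneg. intros; left; apply a_pos; lia. Qed.

Lemma bk_breakpoint k : (1 <= k <= n)%nat -> bk a (dF n a) (sF n a) k = breakpoint k.
Proof.
  intros Hk. unfold bk, breakpoint.
  rewrite dF_pred, sF_pred by auto. rewrite eta_pos by (apply a_pos; lia). ring.
Qed.

Lemma breakpoint_succ k : (k < n)%nat ->
  breakpoint (k + 1) = sF n a k + dF n a k * ln (a (k + 1)%nat).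
Proof.
  intros Hk. rewrite <- bk_breakpoint by lia. unfold bk.
  replace (k + 1 - 1)%nat with k by lia. reflexivity.
Qed.

Lemma breakpoint_n : breakpoint n = 0.
Proof.
  unfold breakpoint, dF, sF. rewrite !sum_n_m_zero by lia.
  change (@zero R_AbelianMonoid) with 0. ring.
Qed.

Lemma breakpoint_antitone i j : (1 <= i <= j)%nat -> (j <= n)%nat -> breakpoint j <= breakpoint i.
Proof.
  intros Hij Hjn. induction j as [|j IH]; [lia|].
  destruct (Nat.eq_dec i (S j)) as [->|Hne]; [lra|].
  apply Rle_trans with (breakpoint j); [|apply IH; lia].
  replace (S j) with (j + 1)%nat by lia. rewrite breakpoint_succ by lia. unfold breakpoint.
  assert (0 <= dF n a j) by apply dF_nonneg.
  assert (ln (a (j + 1)%nat) <= ln (a j)) by (apply ln_le; [apply a_pos; lia|apply a_step; lia]).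
  nra.
Qed.

Definition on_piece (b : R) (k : nat) : Prop :=
  (1 <= k <= n - 1)%nat /\ breakpoint (k + 1) <= b /\ ((2 <= k)%nat -> b < breakpoint k).

Lemma on_piece_exists b : 0 < b -> exists k, on_piece b k.
Proof.
  intros Hb. destruct (Rle_dec (breakpoint 2) b) as [Hle|Hlt].
  { exists 1%nat. repeat split; auto; lia. }
  assert (Gen : forall t j, (j + t = n)%nat -> (2 <= j)%nat -> b < breakpoint j ->
    exists k, on_piece b k).
  { induction t as [|t IH]; intros j Hjt Hj Hbj.
    - rewrite Nat.add_0_r in Hjt. subst j. rewrite breakpoint_n in Hbj. lra.
    - destruct (Rle_dec (breakpoint (j + 1)) b) as [Hle2|Hlt2].
      + exists j. repeat split; auto; lia.
      + apply (IH (j + 1)%nat); lia || lra. }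
  apply (Gen (n - 2)%nat 2%nat); lia || lra.
Qed.

Lemma indB_on_piece b k j : on_piece b k -> (1 <= j <= n - 1)%nat ->
  indB a (dF n a) (sF n a) j b = if Nat.eqb j k then 1 else 0.
Proof.
  intros [Hk [Hlo Hhi]] Hj. unfold indB.
  rewrite (bk_breakpoint (j + 1)), (bk_breakpoint j), bk_breakpoint by lia.
  destruct (Nat.eqb j k) eqn:Ejk.
  - apply Nat.eqb_eq in Ejk. subst j. destruct (Nat.eqb k 1) eqn:Ek.
    + apply Nat.eqb_eq in Ek. subst k.
      destruct (Rle_dec (breakpoint 2) b); [reflexivity|contradiction].
    + apply Nat.eqb_neq in Ek.
      destruct (Rle_dec (breakpoint (k + 1)) b); [|contradiction].
      destruct (Rlt_dec b (breakpoint k)); [reflexivity|]. exfalso; apply n0, Hhi; lia.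
  - apply Nat.eqb_neq in Ejk. destruct (Nat.eqb j 1) eqn:Ej.
    + apply Nat.eqb_eq in Ej. subst j.
      destruct (Rle_dec (breakpoint 2) b) as [Hr|Hr]; [|reflexivity].
      pose proof (breakpoint_antitone 2 k ltac:(lia) ltac:(lia)).
      specialize (Hhi ltac:(lia)). lra.
    + destruct (Rle_dec (breakpoint (j + 1)) b) as [Hr|Hr]; [|reflexivity].
      destruct (Rlt_dec b (breakpoint j)) as [Hr2|Hr2]; [|reflexivity].
      exfalso. destruct (Compare_dec.le_lt_dec j k).
      * pose proof (breakpoint_antitone (j + 1) k ltac:(lia) ltac:(lia)).
        specialize (Hhi ltac:(lia)). lra.
      * pose proof (breakpoint_antitone (k + 1) j ltac:(lia) ltac:(lia)). lra.
Qed.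

Lemma z0_on_piece b k : 0 < b -> on_piece b k ->
  z0F n a b = INR k + dF n a k * exp ((sF n a k - b) / dF n a k).
Proof.
  intros Hb Hp. unfold z0F. destruct (Req_EM_T b 0) as [E|_]; [lra|].
  pose proof Hp as [Hk _].
  rewrite (sum_n_m_single _ 1 (n - 1) k) by (auto; intros j Hj Hjk; unfold z0_term;
    rewrite (indB_on_piece b k j) by auto; apply Nat.eqb_neq in Hjk; rewrite Hjk; ring).
  unfold z0_term. rewrite (indB_on_piece b k k), Nat.eqb_refl by auto. ring.
Qed.

Lemma Phi_Zeta_on_piece k c : (1 <= k <= n - 1)%nat -> a (k + 1)%nat <= c ->
  ((2 <= k)%nat -> c <= a k) ->
  Phi c = sF n a k + dF n a k * ln c /\ Zeta c = INR (k - 1) + dF n a k / c.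
Proof.
  intros Hk Hclo Hchi.
  assert (Hc : 0 < c) by (apply Rlt_le_trans with (a (k + 1)%nat); auto; apply a_pos; lia).
  assert (Hlow : forall i, (2 <= i <= k)%nat -> c <= a i).
  { intros i Hi. apply Rle_trans with (a k). apply Hchi; lia. apply a_antitone; lia. }
  assert (Hup : forall i, (k + 1 <= i <= n)%nat -> a i <= c).
  { intros i Hi. apply Rle_trans with (a (k + 1)%nat); auto. apply a_antitone; lia. }
  assert (Hd : sum_n_m a (S k) n = dF n a k) by (unfold dF; f_equal; lia).
  split.
  - unfold Phi. change_eq_R. rewrite (sum_n_m_split _ 2 k n) by lia.
    rewrite sum_n_m_zero_loc.
    2:{ intros i Hi. unfold phi_term.
        rewrite level_of_le by (apply a_pos || apply Hlow; lia). ring. }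
    rewrite (sum_n_m_ext_loc _ (fun i => ln c * a i + eta (a i))).
    2:{ intros i Hi. unfold phi_term. assert (0 < a i) by (apply a_pos; lia).
        rewrite level_of_ge by (auto; apply Hup; lia). rewrite eta_pos, ln_div by lra.
        change_eq_R. ring. }
    rewrite sum_n_m_plus_R, sum_n_m_scal_R, Hd.
    replace (sum_n_m (fun i => eta (a i)) (S k) n) with (sF n a k) by (unfold sF; f_equal; lia).
    ring.
  - unfold Zeta. change_eq_R. rewrite (sum_n_m_split _ 2 k n) by lia.
    rewrite (sum_n_m_ext_loc (zeta_term a c) (fun _ => 1) 2 k)
      by (intros i Hi; apply zeta_term_of_le; (apply a_pos || apply Hlow); lia).
    rewrite (sum_n_m_ext_loc (zeta_term a c) (fun i => / c * a i) (S k) n)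
      by (intros i Hi; apply zeta_term_of_ge; (apply a_pos || apply Hup); lia).
    rewrite sum_n_m_scal_R, sum_n_m_const, Hd.
    replace (S k - 2)%nat with (k - 1)%nat by lia. unfold Rdiv. ring.
Qed.

Lemma is_level_on_piece b k : 0 < b -> on_piece b k ->
  is_level b (exp ((b - sF n a k) / dF n a k)).
Proof.
  intros Hb Hp. pose proof Hp as [Hk [Hlo Hhi]].
  set (c := exp ((b - sF n a k) / dF n a k)).
  assert (Hd : 0 < dF n a k) by (apply dF_pos; lia).
  assert (Hlnc : ln c = (b - sF n a k) / dF n a k) by (unfold c; apply ln_exp).
  assert (Hclo : a (k + 1)%nat <= c).
  { rewrite breakpoint_succ in Hlo by lia.
    rewrite <- (exp_ln (a (k + 1)%nat)) by (apply a_pos; lia). unfold c.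
    apply exp_le_compat. apply Rcomplements.Rle_div_r; auto. lra. }
  assert (Hchi : (2 <= k)%nat -> c < a k).
  { intros Hk2. specialize (Hhi Hk2). unfold breakpoint in Hhi.
    rewrite <- (exp_ln (a k)) by (apply a_pos; lia). unfold c.
    apply exp_increasing. apply Rcomplements.Rlt_div_l; auto. lra. }
  destruct (Phi_Zeta_on_piece k c Hk Hclo (fun h => Rlt_le _ _ (Hchi h))) as [P Z].
  split; [|split].
  - apply Rle_trans with (a (k + 1)%nat); auto. apply a_antitone; lia.
  - rewrite P, Hlnc. field. lra.
  - rewrite (z0_on_piece b k), Z by auto.
    replace (exp ((sF n a k - b) / dF n a k)) with (/ c)
      by (unfold c; rewrite <- exp_Ropp; f_equal; field; lra).
    replace (INR k) with (1 + INR (k - 1))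
      by (replace k with (S (k - 1)) at 2 by lia; rewrite S_INR; ring).
    unfold Rdiv. ring.
Qed.

Lemma level_exists b : 0 < b -> exists c, is_level b c.
Proof.
  intros Hb. destruct (on_piece_exists b Hb) as [k Hk].
  eexists. apply (is_level_on_piece b k Hb Hk).
Qed.

Lemma Phi_slope c c' : a n <= c -> c <= c' -> a n * ln (c' / c) <= Phi c' - Phi c.
Proof.
  intros Hc Hcc. pose proof an_pos as Han.
  assert (E : forall x, Phi x = sum_n_m (phi_term a x) 2 (n - 1) + phi_term a x n).
  { intros x. unfold Phi. replace n with (S (n - 1)) at 1 by lia.
    rewrite sum_n_m_last by lia. replace (S (n - 1)) with n by lia. reflexivity. }
  rewrite !E.
  assert (sum_n_m (phi_term a c) 2 (n - 1) <= sum_n_m (phi_term a c') 2 (n - 1)).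
  { apply sum_n_m_le_loc. intros k Hk. apply phi_term_le_mono; auto; try lra. apply a_pos; lia. }
  assert (En : forall x, a n <= x -> phi_term a x n = a n * (ln x - ln (a n))).
  { intros x Hx. unfold phi_term. rewrite level_of_ge, ln_div by lra. reflexivity. }
  rewrite !En, ln_div by lra. lra.
Qed.

Lemma Phi_le_mono c c' : a n <= c -> c <= c' -> Phi c <= Phi c'.
Proof.
  intros Hc Hcc. pose proof (Phi_slope c c' Hc Hcc). pose proof an_pos.
  assert (0 <= ln (c' / c)).
  { rewrite <- ln_1. apply ln_le. lra. apply Rcomplements.Rle_div_r; lra. }
  nra.
Qed.

Lemma Phi_lt_mono c c' : a n <= c -> c < c' -> Phi c < Phi c'.
Proof.
  intros Hc Hcc. pose proof (Phi_slope c c' Hc (Rlt_le _ _ Hcc)). pose proof an_pos.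
  assert (0 < ln (c' / c)).
  { rewrite <- ln_1. apply ln_increasing. lra. apply Rcomplements.Rlt_div_r; lra. }
  nra.
Qed.

Lemma Phi_an : Phi (a n) = 0.
Proof.
  unfold Phi. change_eq_R. apply sum_n_m_zero_loc. intros i Hi. unfold phi_term.
  rewrite level_of_le by (apply a_pos || apply a_antitone; lia). ring.
Qed.

Lemma Zeta_an : Zeta (a n) = INR n - 1.
Proof.
  unfold Zeta. change_eq_R.
  rewrite (sum_n_m_ext_loc _ (fun _ => 1))
    by (intros i Hi; apply zeta_term_of_le; (apply a_pos || apply a_antitone); lia).
  rewrite sum_n_m_const. replace (S n - 2)%nat with (n - 1)%nat by lia.
  rewrite minus_INR by lia. simpl. ring.
Qed.

Lemma Zeta_nonneg c : 0 <= Zeta c.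
Proof.
  unfold Zeta. apply sum_n_m_nonneg. intros k Hk. left.
  apply Rdiv_lt_0_compat. apply a_pos; lia. apply Rmax_pos_r, a_pos; lia.
Qed.

Lemma is_level_pos b c : is_level b c -> 0 < c.
Proof. intros [H1 _]. pose proof an_pos. lra. Qed.

Lemma is_level_unique b c c' : is_level b c -> is_level b c' -> c = c'.
Proof.
  intros [H1 [H2 H3]] [H1' [H2' H3']].
  destruct (Rtotal_order c c') as [Hl|[He|Hg]]; auto.
  - pose proof (Phi_lt_mono c c' H1 Hl). lra.
  - pose proof (Phi_lt_mono c' c H1' Hg). lra.
Qed.

Lemma is_level_lt b b' c c' : b < b' -> is_level b c -> is_level b' c' -> c < c'.
Proof.
  intros Hb [H1 [H2 H3]] [H1' [H2' H3']].
  destruct (Rlt_or_le c c') as [Hl|Hg]; auto.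
  pose proof (Phi_le_mono c' c H1' Hg). lra.
Qed.

Lemma is_level_of_Phi b c : 0 < b -> a n <= c -> Phi c = b -> is_level b c.
Proof.
  intros Hb Hc P. destruct (level_exists b Hb) as [c' Hc'].
  replace c with c'; auto. destruct Hc' as [Hc1' [P' _]].
  destruct (Rtotal_order c c') as [Hl|[He|Hg]]; auto.
  - pose proof (Phi_lt_mono c c' Hc Hl). lra.
  - pose proof (Phi_lt_mono c' c Hc1' Hg). lra.
Qed.

Lemma z0_ge1 b c : is_level b c -> 1 <= z0F n a b.
Proof. intros [_ [_ ->]]. pose proof (Zeta_nonneg c). lra. Qed.

Lemma sum_exp_sub_tangent c z :
  sum_n_m (fun i => exp (- z i)) 2 n - (Zeta c - / c * (sum_n_m (fun i => a i * z i) 2 n - Phi c))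
  = sum_n_m (fun i => tangent_gap (a i) c (z i)) 2 n.
Proof.
  unfold Zeta, Phi.
  rewrite (sum_n_m_ext (fun i => tangent_gap (a i) c (z i))
    (fun i => (exp (- z i) - zeta_term a c i) + / c * (a i * z i - phi_term a c i)))
    by (intros; apply tangent_gap_split).
  rewrite sum_n_m_plus_R, sum_n_m_minus_R, sum_n_m_scal_R, sum_n_m_minus_R. ring.
Qed.

Lemma sum_exp_ge_tangent c z : 0 < c -> (forall i, (2 <= i <= n)%nat -> 0 <= z i) ->
  Zeta c - / c * (sum_n_m (fun i => a i * z i) 2 n - Phi c) <= sum_n_m (fun i => exp (- z i)) 2 n.
Proof.
  intros Hc H. pose proof (sum_exp_sub_tangent c z).
  assert (0 <= sum_n_m (fun i => tangent_gap (a i) c (z i)) 2 n).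
  { apply sum_n_m_nonneg. intros k Hk. apply tangent_gap_nonneg; auto. apply a_pos; lia. }
  lra.
Qed.

Lemma sum_exp_gt_tangent c z j : 0 < c -> (forall i, (2 <= i <= n)%nat -> 0 <= z i) ->
  (2 <= j <= n)%nat -> z j <> level a c j ->
  Zeta c - / c * (sum_n_m (fun i => a i * z i) 2 n - Phi c) < sum_n_m (fun i => exp (- z i)) 2 n.
Proof.
  intros Hc H Hj Hne. pose proof (sum_exp_sub_tangent c z).
  assert (tangent_gap (a j) c (z j) <= sum_n_m (fun i => tangent_gap (a i) c (z i)) 2 n).
  { apply (sum_n_m_ge_term (fun i => tangent_gap (a i) c (z i))); auto.
    intros k Hk. apply tangent_gap_nonneg; auto. apply a_pos; lia. }
  assert (0 < tangent_gap (a j) c (z j)) by (apply tangent_gap_pos; auto; apply a_pos; lia).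
  lra.
Qed.

Lemma z0_ge_tangent b b' c c' : is_level b c -> is_level b' c' ->
  z0F n a b - (b' - b) / c <= z0F n a b'.
Proof.
  intros Hc Hc'. pose proof (is_level_pos b c Hc) as Hc0.
  destruct Hc as [_ [Pc Zc]]. destruct Hc' as [_ [Pc' Zc']].
  pose proof (sum_exp_ge_tangent c (level a c') Hc0) as K.
  rewrite (sum_n_m_ext_loc (fun i => exp (- level a c' i)) (zeta_term a c'))
    in K by (intros; apply exp_neg_level, a_pos; lia).
  fold (Zeta c') (phi_term a c') in K. fold (Phi c') in K.
  rewrite Zc, Zc'. rewrite Pc, Pc' in K. unfold Rdiv.
  enough (Zeta c - / c * (b' - b) <= Zeta c') by lra.
  apply K. intros i Hi. apply level_nonneg, a_pos; lia.
Qed.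

(* A majorant of [z_0] near [b]: the value of the objective at the rescaled minimizer for [b]. *)
Definition z0_majorant (b c t : R) : R :=
  1 + sum_n_m (fun i => exp (- (t / b) * level a c i)) 2 n.

Lemma z0_le_majorant b b' c c' : 0 < b -> 0 < b' -> is_level b c -> is_level b' c' ->
  z0F n a b' <= z0_majorant b c b'.
Proof.
  intros Hb Hb' Hc Hc'. pose proof (is_level_pos b' c' Hc') as Hc0'.
  destruct Hc as [_ [Pc Zc]]. destruct Hc' as [_ [Pc' Zc']].
  pose proof (sum_exp_ge_tangent c' (fun i => b' / b * level a c i) Hc0') as K.
  rewrite (sum_n_m_ext (fun i => a i * (b' / b * level a c i)) (fun i => b' / b * phi_term a c i))
    in K by (intros; unfold phi_term; change_eq_R; ring).
  rewrite sum_n_m_scal_R in K. fold (Phi c) in K. rewrite Pc, Pc' in K.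
  replace (b' / b * b - b') with 0 in K by (field; lra).
  rewrite Zc'. unfold z0_majorant.
  rewrite (sum_n_m_ext (fun i => exp (- (b' / b) * level a c i))
                       (fun i => exp (- (b' / b * level a c i)))) by (intros; f_equal; ring).
  enough (Zeta c' - / c' * 0 <= sum_n_m (fun i => exp (- (b' / b * level a c i))) 2 n) by lra.
  apply K. intros i Hi.
  apply Rmult_le_pos. apply Rdiv_le_0_compat; lra. apply level_nonneg, a_pos; lia.
Qed.

Lemma z0_majorant_at b c : 0 < b -> z0_majorant b c b = 1 + Zeta c.
Proof.
  intros Hb. unfold z0_majorant, Zeta. f_equal. apply sum_n_m_ext_loc. intros i Hi.
  replace (- (b / b) * level a c i) with (- level a c i) by (field; lra).
  apply exp_neg_level, a_pos; lia.
Qed.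

Lemma z0_majorant_derivative b c : 0 < b -> 0 < c -> Phi c = b ->
  derivable_pt_lim (z0_majorant b c) b (- / c).
Proof.
  intros Hb Hc Pc. apply is_derive_Reals. unfold z0_majorant.
  replace (- / c) with
    (0 + sum_n_m (fun i => exp (- (b / b) * level a c i) * (- / b * level a c i)) 2 n).
  - apply (is_derive_plus (fun _ => 1)); [apply is_derive_Reals, derivable_pt_lim_const|].
    apply (is_derive_sum_n_m (fun i t => exp (- (t / b) * level a c i))). intros i Hi.
    auto_derive; auto. unfold Rdiv. ring.
  - rewrite (sum_n_m_ext_loc _ (fun i => - / b * / c * phi_term a c i)).
    + rewrite sum_n_m_scal_R. fold (Phi c). rewrite Pc. field. split; lra.
    + intros i Hi. assert (0 < a i) by (apply a_pos; lia).
      replace (- (b / b) * level a c i) with (- level a c i) by (field; lra).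
      rewrite exp_neg_level by auto. change_eq_R.
      replace (- / b * / c * phi_term a c i) with (- / b * (/ c * phi_term a c i)) by ring.
      rewrite <- level_mul_zeta_term by auto. ring.
Qed.

(* [z_0] lies between its tangent line at [b] and the majorant, which has slope [- 1/c] at [b]. *)
Lemma z0_derivative b c : 0 < b -> is_level b c -> derivable_pt_lim (z0F n a) b (- / c).
Proof.
  intros Hb Hc. pose proof (is_level_pos b c Hc) as Hc0.
  apply (derivable_pt_lim_squeeze (z0F n a) (z0_majorant b c) b (- / c) b Hb).
  - rewrite z0_majorant_at by auto. destruct Hc as [_ [_ Z]]. auto.
  - apply z0_majorant_derivative; auto. apply Hc.
  - intros y Hy. assert (Hy0 : 0 < y) by (unfold Rabs in Hy; destruct (Rcase_abs _); lra).
    destruct (level_exists y Hy0) as [c' Hc']. split.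
    + pose proof (z0_ge_tangent b y c c' Hc Hc'). unfold Rdiv in *. lra.
    + apply (z0_le_majorant b y c c'); auto.
Qed.

Lemma Derive_z0 b c : 0 < b -> is_level b c -> Derive (z0F n a) b = - / c.
Proof. intros. apply is_derive_unique, is_derive_Reals, z0_derivative; auto. Qed.

Lemma Psi_pos c : 0 < c -> 0 < Psi c.
Proof. intros Hc. unfold Psi. pose proof (Zeta_nonneg c). nra. Qed.

Lemma Psi_lt_mono c c' : 0 < c -> c < c' -> Psi c < Psi c'.
Proof.
  intros Hc Hcc. unfold Psi, Zeta. rewrite !Rmult_plus_distr_l, !Rmult_1_r, <- !sum_n_m_scal_R.
  enough (sum_n_m (fun k => c * zeta_term a c k) 2 n <= sum_n_m (fun k => c' * zeta_term a c' k) 2 n)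
    by lra.
  apply sum_n_m_le_loc. intros k Hk. apply scaled_zeta_term_le_mono; try lra. apply a_pos; lia.
Qed.

Lemma Psi_an : Psi (a n) = a n * INR n.
Proof. unfold Psi. rewrite Zeta_an. ring. Qed.

Lemma Psi_of_level b c : is_level b c -> c * z0F n a b = Psi c.
Proof. intros [_ [_ ->]]. reflexivity. Qed.

Lemma f_derivative th b c : 0 < b -> is_level b c ->
  derivable_pt_lim (fF n a th) b (th - / Psi c).
Proof.
  intros Hb Hc. pose proof (z0_ge1 b c Hc). pose proof (is_level_pos b c Hc).
  rewrite <- (Psi_of_level b c Hc).
  replace (th - / (c * z0F n a b)) with (th + (- / c) / z0F n a b) by (field; lra).
  apply (derivable_pt_lim_affine_ln (z0F n a)); [lra|]. apply z0_derivative; auto.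
Qed.

Lemma Derive_f th b c : 0 < b -> is_level b c -> Derive (fF n a th) b = th - / Psi c.
Proof. intros. apply is_derive_unique, is_derive_Reals, f_derivative; auto. Qed.

Lemma Derive_f_spec th b : 0 < b ->
  derivable_pt_lim (fF n a th) b (Derive (fF n a th) b).
Proof.
  intros Hb. destruct (level_exists b Hb) as [c Hc].
  rewrite (Derive_f th b c) by auto. apply f_derivative; auto.
Qed.

Lemma f_continuous th b : 0 < b -> continuity_pt (fF n a th) b.
Proof.
  intros Hb. apply derivable_continuous_pt. exists (Derive (fF n a th) b). apply Derive_f_spec; auto.
Qed.

(* [- ln c] as a function of [b]: it is [1/a_n]-Lipschitz by [Phi_slope]. *)
Definition log_inv_level (b : R) : R := ln (- Derive (z0F n a) b).

Lemma log_inv_level_eq b c : 0 < b -> is_level b c -> log_inv_level b = - ln c.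
Proof.
  intros Hb Hc. unfold log_inv_level. rewrite (Derive_z0 b c), Ropp_involutive by auto.
  apply ln_Rinv, (is_level_pos b c Hc).
Qed.

Lemma log_inv_level_lipschitz b y : 0 < b -> 0 < y ->
  Rabs (log_inv_level y - log_inv_level b) <= / a n * Rabs (y - b).
Proof.
  assert (Hone : forall u v c c', u < v -> is_level u c -> is_level v c' ->
            a n * (ln c' - ln c) <= v - u).
  { intros u v c c' Hl Hc Hc'. pose proof (is_level_pos u c Hc).
    pose proof (is_level_lt u v c c' Hl Hc Hc') as Hcc.
    pose proof (Phi_slope c c' (proj1 Hc) (Rlt_le _ _ Hcc)) as Hs.
    destruct Hc as [_ [P1 _]]. destruct Hc' as [_ [P2 _]].
    rewrite P1, P2, ln_div in Hs by lra. lra. }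
  intros Hb Hy. pose proof an_pos as Han.
  destruct (level_exists b Hb) as [c Hc]. destruct (level_exists y Hy) as [c' Hc'].
  rewrite (log_inv_level_eq b c), (log_inv_level_eq y c') by auto.
  pose proof (is_level_pos b c Hc). pose proof (is_level_pos y c' Hc').
  assert (Hkey : a n * Rabs (ln c' - ln c) <= Rabs (y - b)).
  { destruct (Rtotal_order b y) as [Hl|[He|Hg]].
    - pose proof (Hone b y c c' Hl Hc Hc'). pose proof (is_level_lt b y c c' Hl Hc Hc').
      assert (ln c < ln c') by (apply ln_increasing; lra).
      rewrite !Rabs_right by lra. lra.
    - subst y. rewrite (is_level_unique b c c' Hc Hc'), !Rminus_diag, Rabs_R0. lra.
    - pose proof (Hone y b c' c Hg Hc' Hc). pose proof (is_level_lt y b c' c Hg Hc' Hc).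
      assert (ln c' < ln c) by (apply ln_increasing; lra).
      rewrite !Rabs_left by lra. lra. }
  replace (- ln c' - - ln c) with (- (ln c' - ln c)) by ring. rewrite Rabs_Ropp.
  apply Rmult_le_reg_l with (a n); auto. rewrite <- Rmult_assoc, Rinv_r, Rmult_1_l by lra. lra.
Qed.

Lemma Derive_f_continuous th b : 0 < b -> continuity_pt (Derive (fF n a th)) b.
Proof.
  intros Hb. pose proof an_pos as Han.
  destruct (level_exists b Hb) as [c Hc].
  set (F := fun t => th - exp (log_inv_level t) / z0F n a t).
  apply (continuity_pt_loc_eq F _ b b Hb).
  - intros y Hy. assert (Hy0 : 0 < y) by (unfold Rabs in Hy; destruct (Rcase_abs _); lra).
    destruct (level_exists y Hy0) as [c' Hc'].
    unfold F. rewrite (Derive_f th y c'), (log_inv_level_eq y c') by auto.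
    rewrite <- (Psi_of_level y c' Hc').
    pose proof (is_level_pos y c' Hc'). pose proof (z0_ge1 y c' Hc').
    rewrite exp_Ropp, exp_ln by auto. field. lra.
  - unfold F. apply (continuity_pt_minus (fun _ => th)); [apply continuity_pt_const; intros ? ?; auto|].
    apply (continuity_pt_div (comp exp log_inv_level) (z0F n a)).
    + apply continuity_pt_comp; [|apply derivable_continuous_pt, derivable_pt_exp].
      apply (continuity_pt_lipschitz _ b b (/ a n)); auto.
      left; apply Rinv_0_lt_compat; auto.
      intros y Hy. apply log_inv_level_lipschitz; auto.
      unfold Rabs in Hy; destruct (Rcase_abs _); lra.
    + apply derivable_continuous_pt. exists (- / c). apply z0_derivative; auto.
    + pose proof (z0_ge1 b c Hc). lra.
Qed.

Lemma f_at0 th : fF n a th 0 = ln (INR n).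
Proof. unfold fF, z0F. destruct (Req_EM_T 0 0); [|lra]. ring. Qed.

Lemma z0_ge_near0 h c : 0 < h -> is_level h c -> INR n - h / a n <= z0F n a h.
Proof.
  intros Hh Hc. pose proof an_pos as Han. destruct Hc as [Hc1 [Pc Zc]].
  pose proof (sum_exp_ge_tangent (a n) (level a c) Han) as K.
  rewrite (sum_n_m_ext_loc (fun i => exp (- level a c i)) (zeta_term a c))
    in K by (intros; apply exp_neg_level, a_pos; lia).
  fold (Zeta c) (phi_term a c) in K. fold (Phi c) in K. rewrite Pc, Phi_an, Zeta_an in K.
  rewrite Zc. unfold Rdiv.
  enough (INR n - 1 - / a n * (h - 0) <= Zeta c) by lra.
  apply K. intros i Hi. apply level_nonneg, a_pos; lia.
Qed.

(* Test the tangent bound with the point that puts all the mass [h] on the last coordinate. *)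
Lemma z0_le_near0 h c : 0 < h -> is_level h c -> z0F n a h <= INR n - 1 + exp (- (h / a n)).
Proof.
  intros Hh Hc. pose proof an_pos as Han. pose proof (is_level_pos h c Hc) as Hc0.
  destruct Hc as [Hc1 [Pc Zc]].
  set (z := fun i => if Nat.eqb i n then h / a n else 0).
  pose proof (sum_exp_ge_tangent c z Hc0) as K.
  assert (S1 : sum_n_m (fun i => a i * z i) 2 n = h).
  { rewrite (sum_n_m_single _ 2 n n) by (try lia; intros k Hk Hkn; unfold z;
      apply Nat.eqb_neq in Hkn; rewrite Hkn; change_eq_R; ring).
    unfold z. rewrite Nat.eqb_refl. change_eq_R. field. lra. }
  assert (S2 : sum_n_m (fun i => exp (- z i)) 2 n = INR n - 2 + exp (- (h / a n))).
  { replace n with (S (n - 1)) at 1 by lia. rewrite sum_n_m_last by lia.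
    replace (S (n - 1)) with n by lia. unfold z at 2. rewrite Nat.eqb_refl.
    rewrite (sum_n_m_ext_loc _ (fun _ => 1)).
    - rewrite sum_n_m_const. replace (S (n - 1) - 2)%nat with (n - 2)%nat by lia.
      rewrite minus_INR by lia. simpl. ring.
    - intros k Hk. unfold z. replace (Nat.eqb k n) with false by (symmetry; apply Nat.eqb_neq; lia).
      rewrite Ropp_0, exp_0. reflexivity. }
  rewrite S1, S2, Pc in K. rewrite Zc.
  enough (Zeta c - / c * (h - h) <= INR n - 2 + exp (- (h / a n))) by lra.
  apply K. intros i Hi. unfold z. destruct (Nat.eqb i n); [apply Rdiv_le_0_compat|]; lra.
Qed.

Lemma f_right_derivative_at0 th :
  right_limit (fun h => (fF n a th h - fF n a th 0) / h) 0 (th - 1 / (a n * INR n)).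
Proof.
  apply (right_limit_ext (fun h => (fF n a th (0 + h) - fF n a th 0) / h));
    [intros; rewrite Rplus_0_l; reflexivity|].
  pose proof an_pos as Han.
  assert (HnR : 2 <= INR n) by (replace 2 with (INR 2) by (simpl; ring); apply le_INR; lia).
  apply (right_derivative_squeeze (fF n a th) (fun t => th * t + ln (INR n - t / a n))
           (fun t => th * t + ln (INR n - 1 + exp (- (t / a n)))) 0 _ (a n) Han).
  - rewrite f_at0. replace (INR n - 0 / a n) with (INR n) by (field; lra). ring.
  - rewrite f_at0. replace (- (0 / a n)) with 0 by (field; lra). rewrite exp_0.
    replace (INR n - 1 + 1) with (INR n) by ring. ring.
  - apply is_derive_Reals. auto_derive.
    + unfold Rdiv. rewrite Rmult_0_l. lra.
    + field. split; lra.
  - apply is_derive_Reals. auto_derive.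
    + pose proof (exp_pos (- (0 / a n))). lra.
    + replace (- (0 * / a n)) with 0 by ring. rewrite exp_0. field. split; lra.
  - intros h Hh. rewrite Rplus_0_l.
    destruct (level_exists h (proj1 Hh)) as [c Hc].
    pose proof (z0_ge_near0 h c (proj1 Hh) Hc). pose proof (z0_le_near0 h c (proj1 Hh) Hc).
    pose proof (z0_ge1 h c Hc).
    assert (h / a n < 1) by (apply Rcomplements.Rlt_div_l; lra).
    unfold fF. split; apply Rplus_le_compat_l; apply ln_le; lra.
Qed.

Lemma f_right_limit th b : 0 <= b -> right_limit (fF n a th) b (fF n a th b).
Proof.
  intros [Hb|<-].
  - apply right_limit_of_continuity_pt, f_continuous; auto.
  - apply (right_limit_of_right_derivative _ 0 (th - 1 / (a n * INR n))).
    apply (right_limit_ext (fun h => (fF n a th h - fF n a th 0) / h));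
      [intros; rewrite Rplus_0_l; reflexivity|apply f_right_derivative_at0].
Qed.

Lemma level_le_exp b c : 0 < b -> is_level b c -> c <= a n * exp (b / a n).
Proof.
  intros Hb Hc. pose proof an_pos as Han. pose proof (proj1 Hc) as Hc1.
  pose proof (Phi_slope (a n) c (Rle_refl _) Hc1) as Hs. rewrite Phi_an in Hs.
  destruct Hc as [_ [Pc _]]. rewrite Pc, ln_div in Hs by lra.
  assert (ln c <= ln (a n) + b / a n).
  { apply Rmult_le_reg_l with (a n); auto.
    replace (a n * (ln (a n) + b / a n)) with (a n * ln (a n) + b) by (field; lra). lra. }
  rewrite <- (exp_ln c) by lra. rewrite <- (exp_ln (a n)) at 1 by lra. rewrite <- exp_plus.
  apply exp_le_compat. lra.
Qed.

(* Near [0], [c z_0] is squeezed between [a_n n - b] and [a_n e^(b/a_n) (n - 1 + e^(-b/a_n))]. *)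
Lemma Derive_f_right_limit_at0 th :
  right_limit (Derive (fF n a th)) 0 (th - 1 / (a n * INR n)).
Proof.
  pose proof an_pos as Han.
  assert (HnR : 2 <= INR n) by (replace 2 with (INR 2) by (simpl; ring); apply le_INR; lia).
  apply (right_limit_squeeze (Derive (fF n a th)) (fun t => th - / (a n * INR n - t))
        (fun t => th - / (a n * exp (t / a n) * (INR n - 1 + exp (- (t / a n))))) 0 _ (a n) Han).
  - rewrite Rminus_0_r. unfold Rdiv. ring.
  - replace (- (0 / a n)) with 0 by (field; lra). replace (0 / a n) with 0 by (field; lra).
    rewrite exp_0. unfold Rdiv. rewrite Rmult_1_l, Rmult_1_r. do 2 f_equal. ring.
  - apply continuity_pt_of_ex_derive. auto_derive. nra.
  - apply continuity_pt_of_ex_derive. auto_derive.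
    pose proof (exp_pos (0 / a n)). pose proof (exp_pos (- (0 / a n))).
    assert (0 < a n * exp (0 / a n) * (INR n - 1 + exp (- (0 / a n)))) by
      (apply Rmult_lt_0_compat; [apply Rmult_lt_0_compat|]; lra).
    lra.
  - intros t [Ht0 Ht]. rewrite Rplus_0_l in Ht.
    destruct (level_exists t Ht0) as [c Hc].
    rewrite (Derive_f th t c), <- (Psi_of_level t c Hc) by auto.
    pose proof (z0_ge_near0 t c Ht0 Hc). pose proof (z0_le_near0 t c Ht0 Hc).
    pose proof (z0_ge1 t c Hc).
    assert (Hc1 : a n <= c) by apply Hc.
    pose proof (level_le_exp t c Ht0 Hc) as Hc2.
    assert (Hlo : a n * INR n - t <= c * z0F n a t).
    { assert (t / a n < 1) by (apply Rcomplements.Rlt_div_l; lra).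
      apply Rle_trans with (a n * (INR n - t / a n)); [right; field; lra|].
      apply Rmult_le_compat; lra. }
    assert (Hup : c * z0F n a t <= a n * exp (t / a n) * (INR n - 1 + exp (- (t / a n))))
      by (apply Rmult_le_compat; lra).
    assert (0 < a n * INR n - t) by nra.
    split; apply Rplus_le_compat_l, Ropp_le_contravar, Rinv_le_contravar; lra.
Qed.

Lemma f_mean_value th x y : 0 <= x < y ->
  exists xi, x < xi < y /\ fF n a th y - fF n a th x = Derive (fF n a th) xi * (y - x).
Proof.
  intros Hxy. apply mean_value_right_cont; [lra| | |apply f_right_limit; lra].
  - intros c Hc. apply Derive_f_spec; lra.
  - intros c Hc. apply f_continuous; lra.
Qed.

Lemma Derive_f_nondecreasing th u v : 0 < u -> u <= v ->
  Derive (fF n a th) u <= Derive (fF n a th) v.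
Proof.
  intros Hu [Huv|<-]; [|lra].
  destruct (level_exists u Hu) as [cu Hcu]. destruct (level_exists v ltac:(lra)) as [cv Hcv].
  rewrite (Derive_f th u cu), (Derive_f th v cv) by (auto; lra).
  pose proof (is_level_pos u cu Hcu) as Hcu0.
  pose proof (Psi_lt_mono cu cv Hcu0 (is_level_lt u v cu cv Huv Hcu Hcv)).
  pose proof (Psi_pos cu Hcu0).
  apply Rplus_le_compat_l, Ropp_le_contravar, Rinv_le_contravar; lra.
Qed.

Lemma f_convex th : convex_on (fun b => 0 <= b) (fF n a th).
Proof.
  apply (convex_on_of_deriv_nondecreasing _ _ (Derive (fF n a th))).
  - intros x c Hx Hc. apply Derive_f_spec; lra.
  - intros x c Hx Hc. apply f_continuous; lra.
  - intros x Hx. apply f_right_limit; auto.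
  - intros x u v Hx Hu Huv. apply Derive_f_nondecreasing; lra.
Qed.

Lemma feasible_nonneg x : feasibleF n a x -> forall i, (1 <= i <= n)%nat -> 0 <= x i.
Proof.
  intros [H1 [H2 H3]] i Hi. induction i as [|i IH]; [lia|].
  destruct (Nat.eq_dec i 0) as [->|Hne]; [rewrite H1; lra|].
  apply Rle_trans with (x i); [apply IH; lia|].
  replace (S i) with (i + 1)%nat by lia. apply H2; lia.
Qed.

Lemma level_point_feasible b c : 0 < b -> 0 < c -> Phi c = b -> feasibleF n a (level_point a c b).
Proof.
  intros Hb Hc Pc. split; [|split].
  - reflexivity.
  - intros i Hi. destruct (Nat.eq_dec i 1) as [->|Hi1].
    + simpl. unfold level_point at 2. simpl. apply Rdiv_le_0_compat; auto.
      apply level_nonneg, a_pos; lia.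
    + unfold level_point. replace (Nat.eqb i 1) with false by (symmetry; apply Nat.eqb_neq; auto).
      replace (Nat.eqb (i + 1) 1) with false by (symmetry; apply Nat.eqb_neq; lia).
      unfold Rdiv. apply Rmult_le_compat_r; [left; apply Rinv_0_lt_compat; auto|].
      apply level_antitone; [apply a_pos; lia|apply a_step; lia].
  - rewrite sum_n_m_first by lia. simpl. change_eq_R.
    rewrite (sum_n_m_ext_loc _ (fun i => / b * phi_term a c i)).
    + rewrite sum_n_m_scal_R. fold (Phi c). rewrite Pc. unfold level_point. simpl. field. lra.
    + intros i Hi. unfold phi_term, level_point.
      replace (Nat.eqb i 1) with false by (symmetry; apply Nat.eqb_neq; lia).
      change_eq_R. field. lra.
Qed.

Lemma obj_level_point b c : 0 < b -> objF n b (level_point a c b) = 1 + Zeta c.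
Proof.
  intros Hb. unfold objF. rewrite sum_n_m_first by lia. simpl.
  rewrite Rmult_0_r, exp_0. f_equal. unfold Zeta. apply sum_n_m_ext_loc. intros i Hi.
  rewrite <- Ropp_mult_distr_l, level_point_scaled by (lia || lra).
  apply exp_neg_level, a_pos; lia.
Qed.

Lemma minimizer_eq_level_point b c x : 0 < b -> is_level b c -> minimizerF n a b x ->
  forall i, (1 <= i <= n)%nat -> x i = level_point a c b i.
Proof.
  intros Hb Hc [Hf Hmin] i Hi. pose proof (is_level_pos b c Hc) as Hc0.
  destruct Hc as [Hc1 [Pc Zc]].
  destruct (Nat.eq_dec i 1) as [->|Hi1]; [apply Hf|].
  destruct (Req_dec (x i) (level_point a c b i)) as [E|Hne]; auto. exfalso.
  pose proof (Hmin _ (level_point_feasible b c Hb Hc0 Pc)) as Hle.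
  rewrite obj_level_point in Hle by auto.
  pose proof (feasible_nonneg x Hf) as Hnn.
  destruct Hf as [Hx1 [_ Hsum]].
  rewrite sum_n_m_first, Hx1, Rmult_0_r, Rplus_0_l in Hsum by lia.
  unfold objF in Hle. rewrite sum_n_m_first, Hx1, Rmult_0_r, exp_0 in Hle by lia.
  assert (K : Zeta c - / c * (sum_n_m (fun k => a k * (b * x k)) 2 n - Phi c)
              < sum_n_m (fun k => exp (- (b * x k))) 2 n).
  { apply (sum_exp_gt_tangent c _ i); auto; [intros k Hk; apply Rmult_le_pos; [lra|apply Hnn; lia]|lia|].
    intros Habs. apply Hne. rewrite <- (level_point_scaled a c b i) in Habs by (lia || lra).
    apply Rmult_eq_reg_l in Habs; lra. }
  rewrite (sum_n_m_ext (fun k => a k * (b * x k)) (fun k => b * (a k * x k))) in K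
    by (intros; change_eq_R; ring).
  rewrite sum_n_m_scal_R, Hsum, Pc in K.
  rewrite (sum_n_m_ext (fun k => exp (- (b * x k))) (fun k => exp (- b * x k))) in K
    by (intros; f_equal; ring).
  replace (b * 1 - b) with 0 in K by ring. lra.
Qed.

Lemma f_pos th b : 0 < th -> 0 <= b -> 0 < fF n a th b.
Proof.
  intros Hth [Hb|<-].
  - destruct (level_exists b Hb) as [c Hc]. pose proof (z0_ge1 b c Hc).
    unfold fF. assert (0 <= ln (z0F n a b)) by (rewrite <- ln_1; apply ln_le; lra). nra.
  - rewrite f_at0, <- ln_1. apply ln_increasing; [lra|].
    replace 1 with (INR 1) by reflexivity. apply lt_INR; lia.
Qed.

Lemma f_to_p_infty th : 0 < th ->
  filterlim (fF n a th) (Rbar_locally p_infty) (Rbar_locally p_infty).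
Proof.
  intros Hth. apply (filterlim_affine_ln_p_infty (z0F n a)); auto.
  intros b Hb. destruct (level_exists b Hb) as [c Hc]. apply (z0_ge1 b c Hc).
Qed.

Definition optimal_level (th : R) (m : nat) : R := (1 - th * dF n a m) / (th * INR m).

Lemma mF_bounds th m : 0 < th -> a n * INR n < 1 / th -> is_mF n a th m ->
  (1 <= m <= n - 1)%nat /\ 0 < 1 - th * dF n a m /\
  a (m + 1)%nat < optimal_level th m /\ ((2 <= m)%nat -> optimal_level th m <= a m).
Proof.
  intros Hth HB Hm. unfold optimal_level.
  assert (Hd0 : 0 < dF n a 0) by (apply dF_pos; lia).
  destruct Hm as [[H1 ->]|[H1 [Hm1 [Hm2 Hm3]]]].
  - apply Rlt_inv_iff in H1; auto.
    pose proof (dF_pred 1 ltac:(lia)) as E. simpl in E.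
    assert (0 < a 1%nat) by (apply a_pos; lia). assert (a 2%nat <= a 1%nat) by (apply (a_step 1%nat); lia).
    assert (0 <= dF n a 1) by apply dF_nonneg.
    split; [lia|]. split; [nra|]. split; [|intros; lia].
    simpl INR. rewrite Rmult_1_r. apply Rcomplements.Rlt_div_r; [lra|]. simpl. nra.
  - assert (HmR : 1 <= INR m) by (replace 1 with (INR 1) by reflexivity; apply le_INR; lia).
    pose proof (dF_pred (m + 1) ltac:(lia)) as E. replace (m + 1 - 1)%nat with m in E by lia.
    assert (HT : th * (dF n a (m + 1) + INR (m + 1) * a (m + 1)%nat) < 1).
    { destruct (Nat.eq_dec (m + 1) n) as [Heq|Hne].
      - rewrite Heq. unfold dF. rewrite sum_n_m_zero by lia.
        apply Rlt_inv_iff in HB; auto. change (@zero R_AbelianMonoid) with 0. nra.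
      - destruct (Rlt_or_le (th * (dF n a (m + 1) + INR (m + 1) * a (m + 1)%nat)) 1) as [Hl|Hl];
          [exact Hl|].
        exfalso. apply (proj2 (Rge_inv_iff th _ Hth)) in Hl. specialize (Hm3 (m + 1)%nat ltac:(lia) Hl).
        lia. }
    rewrite plus_INR in HT. simpl INR in HT.
    assert (0 < a (m + 1)%nat) by (apply a_pos; lia).
    assert (0 <= dF n a (m + 1)) by apply dF_nonneg.
    assert (0 <= th * INR m * a (m + 1)%nat) by (apply Rmult_le_pos; [apply Rmult_le_pos|]; lra).
    assert (HT2 : th * (INR m * a (m + 1)%nat + dF n a m) < 1) by (rewrite E; nra).
    split; [auto|]. split; [nra|]. split.
    + apply Rcomplements.Rlt_div_r; nra.
    + intros _. apply Rcomplements.Rle_div_l; [nra|]. apply Rge_inv_iff in Hm2; auto. nra.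
Qed.

Lemma Derive_f_pos th b c : 0 < th -> 0 < b -> is_level b c -> 1 / th < Psi c ->
  0 < Derive (fF n a th) b.
Proof.
  intros Hth Hb Hc HP. rewrite (Derive_f th b c) by auto. apply sub_inv_pos; auto.
Qed.

Lemma Derive_f_neg th b c : 0 < th -> 0 < b -> is_level b c -> Psi c < 1 / th ->
  Derive (fF n a th) b < 0.
Proof.
  intros Hth Hb Hc HP. rewrite (Derive_f th b c) by auto.
  apply sub_inv_neg; auto. apply Psi_pos, (is_level_pos b c Hc).
Qed.

(* Case A: [Psi] exceeds [1/theta] on the whole range [c > a_n] of levels. *)
Lemma f_strict_min_at0 th : 0 < th -> a n * INR n >= 1 / th ->
  forall b, 0 < b -> fF n a th 0 < fF n a th b.
Proof.
  intros Hth HA b Hb.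
  apply (strict_min_of_deriv_sign (fun b => 0 <= b) _ (Derive (fF n a th))); try lra.
  - intros x y Hx Hxy. apply f_mean_value; lra.
  - intros x xi Hx Hxi. lra.
  - intros xi Hxi. destruct (level_exists xi Hxi) as [c Hc].
    apply (Derive_f_pos th xi c); auto.
    assert (Hc1 : a n < c).
    { destruct Hc as [[Hl|He] [Pc _]]; auto. subst c. rewrite Phi_an in Pc. lra. }
    pose proof (Psi_lt_mono (a n) c an_pos Hc1) as HPsi. rewrite Psi_an in HPsi. lra.
Qed.

(* Case B: the optimal level [c*] solves [Psi c* = 1/theta]. *)
Lemma f_strict_min_caseB th m : 0 < th -> a n * INR n < 1 / th -> is_mF n a th m ->
  let cs := optimal_level th m in
  let bs := sF n a m + dF n a m * ln cs in
  0 < bs /\ is_level bs cs /\ Zeta cs = INR m - 1 + dF n a m / cs /\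
  forall b, 0 <= b -> b <> bs -> fF n a th bs < fF n a th b.
Proof.
  intros Hth HB Hm cs bs.
  destruct (mF_bounds th m Hth HB Hm) as [Hm1 [Hpos [Hlo Hhi]]]. fold cs in Hlo, Hhi.
  assert (HmR : 1 <= INR m) by (replace 1 with (INR 1) by reflexivity; apply le_INR; lia).
  assert (Hcs0 : 0 < cs) by (unfold cs, optimal_level; apply Rdiv_lt_0_compat; nra).
  destruct (Phi_Zeta_on_piece m cs Hm1 (Rlt_le _ _ Hlo) Hhi) as [Pcs Zcs].
  rewrite minus_INR in Zcs by lia. simpl INR in Zcs.
  assert (Hancs : a n < cs) by (apply Rle_lt_trans with (a (m + 1)%nat); auto; apply a_antitone; lia).
  assert (Hbs : 0 < bs).
  { pose proof (Phi_lt_mono (a n) cs (Rle_refl _) Hancs) as HPhi. rewrite Phi_an in HPhi.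
    unfold bs. lra. }
  assert (Hcand : is_level bs cs) by (apply is_level_of_Phi; auto; lra).
  assert (HPsi : Psi cs = 1 / th)
    by (unfold Psi; rewrite Zcs; unfold cs, optimal_level; field; split; lra).
  split; [auto|]. split; [auto|]. split; [auto|].
  apply (strict_min_of_deriv_sign (fun b => 0 <= b) _ (Derive (fF n a th))); try lra.
  - intros x y Hx Hxy. apply f_mean_value; lra.
  - intros x xi Hx Hxi. destruct (level_exists xi ltac:(lra)) as [c Hc].
    apply (Derive_f_neg th xi c); auto; [lra|].
    pose proof (Psi_lt_mono c cs (is_level_pos xi c Hc) (is_level_lt xi bs c cs (proj2 Hxi) Hc Hcand)).
    lra.
  - intros xi Hxi. destruct (level_exists xi ltac:(lra)) as [c Hc].
    apply (Derive_f_pos th xi c); auto; [lra|].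
    pose proof (Psi_lt_mono cs c Hcs0 (is_level_lt bs xi cs c Hxi Hcand Hc)). lra.
Qed.

Lemma f_minimum th x m : 0 < th -> (forall b, 0 < b -> minimizerF n a b (x b)) -> is_mF n a th m ->
  exists bs : R,
    0 <= bs /\
    (forall b, 0 <= b -> fF n a th bs <= fF n a th b) /\
    (forall b, 0 <= b -> fF n a th b = fF n a th bs -> b = bs) /\
    (a n * INR n >= 1 / th -> bs = 0 /\ fF n a th bs = ln (INR n)) /\
    (a n * INR n < 1 / th ->
       bs = sF n a m + dF n a m * ln ((1 - th * dF n a m) / (th * INR m)) /\
       fF n a th bs = bs * th + ln (INR m / (1 - dF n a m * th)) /\
       (forall i, (1 <= i <= m)%nat -> x bs i = 0) /\
       (forall i, (m < i <= n)%nat ->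
          x bs i = 1 / bs * ln ((1 - th * dF n a m) / (a i * th * INR m)))).
Proof.
  intros Hth Hmin Hm.
  destruct (Rle_dec (1 / th) (a n * INR n)) as [HA|HB].
  - pose proof (f_strict_min_at0 th Hth ltac:(lra)) as Strict.
    assert (Strict0 : forall b, 0 <= b -> b <> 0 -> fF n a th 0 < fF n a th b)
      by (intros b Hb Hne; apply Strict; lra).
    exists 0. split; [lra|].
    split; [apply (strict_min_le (fun b => 0 <= b)); auto|].
    split; [apply (strict_min_unique (fun b => 0 <= b)); auto|].
    split; [split; auto; apply f_at0|lra].
  - apply Rnot_le_lt in HB.
    destruct (mF_bounds th m Hth HB Hm) as [Hm1 [Hpos [Hlo Hhi]]].
    destruct (f_strict_min_caseB th m Hth HB Hm) as [Hbs [Hcand [Zcs Strict]]].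
    set (cs := optimal_level th m) in *. set (bs := sF n a m + dF n a m * ln cs) in *.
    assert (HmR : 1 <= INR m) by (replace 1 with (INR 1) by reflexivity; apply le_INR; lia).
    pose proof (is_level_pos bs cs Hcand) as Hcs0.
    pose proof (minimizer_eq_level_point bs cs (x bs) Hbs Hcand (Hmin bs Hbs)) as Hx.
    exists bs. split; [lra|].
    split; [apply (strict_min_le (fun b => 0 <= b)); auto|].
    split; [apply (strict_min_unique (fun b => 0 <= b)); auto|].
    split; [lra|]. intros _. split; [reflexivity|]. split; [|split].
    + unfold fF. destruct Hcand as [_ [_ ->]]. rewrite Zcs. f_equal; [ring|]. f_equal.
      unfold cs, optimal_level. field. split; nra.
    + intros i Hi. rewrite Hx by lia. destruct (Nat.eq_dec i 1) as [->|Hi1]; [reflexivity|].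
      apply level_point_of_le; [apply a_pos; lia|].
      apply Rle_trans with (a m); [apply Hhi; lia|apply a_antitone; lia].
    + intros i Hi. assert (0 < a i) by (apply a_pos; lia).
      assert (a i <= cs) by (apply Rle_trans with (a (m + 1)%nat); [apply a_antitone; lia|lra]).
      rewrite Hx, level_point_of_ge by (auto; lia).
      replace ((1 - th * dF n a m) / (a i * th * INR m)) with (cs / a i)
        by (unfold cs, optimal_level; field; repeat split; lra).
      unfold Rdiv. ring.
Qed.

Lemma level_lt_near0 k : (k <= n)%nat -> a n < a k ->
  exists d, 0 < d /\ forall b c, 0 < b < d -> is_level b c -> c < a k.
Proof.
  intros Hk Hgap. exists (Phi (a k)). split.
  - pose proof (Phi_lt_mono (a n) (a k) (Rle_refl _) Hgap) as HPhi. rewrite Phi_an in HPhi. lra.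
  - intros b c Hb Hc. destruct (Rlt_or_le c (a k)) as [Hl|Hl]; auto.
    destruct Hc as [Hc1 [Pc _]]. pose proof (Phi_le_mono (a k) c ltac:(lra) Hl). lra.
Qed.

Lemma Phi_on_plateau k c : (1 <= k < n)%nat -> (forall i, (k < i <= n)%nat -> a i = a n) ->
  a n <= c -> ((2 <= k)%nat -> c < a k) -> Phi c = INR (n - k) * (a n * ln (c / a n)).
Proof.
  intros Hk Hflat Hc1 Hcl. unfold Phi. change_eq_R. rewrite (sum_n_m_split _ 2 k n) by lia.
  rewrite sum_n_m_zero_loc.
  2:{ intros i Hi. unfold phi_term. rewrite level_of_le; [change_eq_R; ring|apply a_pos; lia|].
      left. apply Rlt_le_trans with (a k); [apply Hcl; lia|apply a_antitone; lia]. }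
  rewrite (sum_n_m_ext_loc _ (fun _ => a n * ln (c / a n))).
  2:{ intros i Hi. assert (Hi' : a i = a n) by (apply Hflat; lia).
      unfold phi_term. rewrite level_of_ge, Hi' by (pose proof an_pos; lra). reflexivity. }
  rewrite sum_n_m_const. replace (S n - S k)%nat with (n - k)%nat by lia. simpl. ring.
Qed.

(* Case A: for small [b] the level stays below [a_mt], so the minimizer is explicit. *)
Lemma minimizer_near0 x mt : (forall b, 0 < b -> minimizerF n a b (x b)) -> is_mtilde n a mt ->
  exists d, 0 < d /\ forall b, 0 < b < d ->
    (forall i, (1 <= i <= mt)%nat -> x b i = 0) /\
    (forall i, (mt < i <= n)%nat -> x b i = 1 / (a n * INR (n - mt))).
Proof.
  intros Hmin [K [HK [HaK [Hmax Hmt]]]]. pose proof an_pos as Han.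
  assert (Hflat : forall i, (mt < i <= n)%nat -> a i = a n).
  { intros i Hi. apply Rle_antisym; [rewrite <- HaK|]; apply a_antitone; lia. }
  assert (Hgap : (2 <= mt)%nat -> a n < a mt).
  { intros Hm2. destruct (a_antitone mt n ltac:(lia) ltac:(lia)) as [Hl|He]; auto.
    exfalso. assert (K + 1 <= K)%nat; [|lia]. apply Hmax; [lia|].
    replace (n - (K + 1) + 1)%nat with mt by lia. auto. }
  assert (Hdel : exists d, 0 < d /\
            forall b c, 0 < b < d -> is_level b c -> (2 <= mt)%nat -> c < a mt).
  { destruct (Compare_dec.le_lt_dec 2 mt) as [Hm2|Hm2].
    - destruct (level_lt_near0 mt ltac:(lia) (Hgap Hm2)) as [d [Hd Hdc]].
      exists d. split; auto. intros b c Hb Hc _. apply (Hdc b c Hb Hc).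
    - exists 1. split; [lra|]. intros; lia. }
  destruct Hdel as [d [Hd Hdc]]. exists d. split; auto. intros b Hb.
  destruct (level_exists b (proj1 Hb)) as [c Hc].
  pose proof (Hdc b c Hb Hc) as Hcl.
  pose proof (minimizer_eq_level_point b c (x b) (proj1 Hb) Hc (Hmin b (proj1 Hb))) as Hx.
  split.
  - intros i Hi. rewrite Hx by lia. destruct (Nat.eq_dec i 1) as [->|Hi1]; [reflexivity|].
    apply level_point_of_le; [apply a_pos; lia|].
    left. apply Rlt_le_trans with (a mt); [apply Hcl; lia|apply a_antitone; lia].
  - intros i Hi. destruct Hc as [Hc1 [Pc _]].
    pose proof (Phi_on_plateau mt c ltac:(lia) Hflat Hc1 Hcl) as EPhi.
    assert (HK0 : 0 < INR (n - mt)) by (apply lt_0_INR; lia).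
    assert (Hi' : a i = a n) by (apply Hflat; lia).
    rewrite Hx, level_point_of_ge, Hi' by (lia || lra).
    rewrite Pc in EPhi. apply Rmult_eq_reg_l with b; [|lra].
    replace (b * (ln (c / a n) / b)) with (ln (c / a n)) by (field; lra).
    rewrite EPhi. field. split; lra.
Qed.

Lemma minimizer_limits_at0 x mt : (forall b, 0 < b -> minimizerF n a b (x b)) -> is_mtilde n a mt ->
  (forall i, (1 <= i <= mt)%nat -> filterlim (fun b => x b i) (at_right 0) (locally 0)) /\
  (forall i, (mt < i <= n)%nat ->
     filterlim (fun b => x b i) (at_right 0) (locally (1 / (a n * INR (n - mt))))).
Proof.
  intros Hmin Hmt. destruct (minimizer_near0 x mt Hmin Hmt) as [d [Hd Hx]].
  split; intros i Hi; apply filterlim_at_right_of_right_limit, right_limit_of_eventually_eq;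
    exists d; split; auto; intros t Ht; apply Hx; lra || lia.
Qed.

End FiniteTuple.
End Finite.

(** * Infinite sequences *)

Module Infinite.
Section InfiniteSequence.

Variable a : nat -> R.
Hypothesis a_pos : forall i, (1 <= i)%nat -> 0 < a i.
Hypothesis a_step : forall i, (1 <= i)%nat -> a (i + 1)%nat <= a i.
Hypothesis a_summable : ex_series (fun j => a (j + 1)%nat).
Hypothesis a_sum_le1 : Series (fun j => a (j + 1)%nat) <= 1.
Hypothesis eta_summable : ex_series (fun j => eta (a (j + 1)%nat)).

Definition Phi (c : R) : R := Tail (phi_term a c) 2.
Definition Zeta (c : R) : R := Tail (zeta_term a c) 2.
Definition Psi (c : R) : R := c * (1 + Zeta c).
Definition breakpoint (k : nat) : R := sI a k + dI a k * ln (a k).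
Definition is_level (b c : R) : Prop := 0 < c /\ Phi c = b /\ z0I a b = 1 + Zeta c.

Lemma ex_tail_a p : (1 <= p)%nat -> ex_tail a p.
Proof.
  intros Hp. apply (ex_tail_shift a 1); auto. apply ex_series_of_tail1; auto.
Qed.

Lemma ex_tail_eta p : (1 <= p)%nat -> ex_tail (fun i => eta (a i)) p.
Proof.
  intros Hp. apply (ex_tail_shift (fun i => eta (a i)) 1); auto.
  apply (ex_series_of_tail1 (fun i => eta (a i))); auto.
Qed.

Lemma a_antitone i j : (1 <= i <= j)%nat -> a j <= a i.
Proof.
  intros Hij. induction j as [|j IH]; [lia|].
  destruct (Nat.eq_dec i (S j)) as [->|Hne]; [lra|].
  apply Rle_trans with (a j); [|apply IH; lia].
  replace (S j) with (j + 1)%nat by lia. apply a_step; lia.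
Qed.

Lemma a_le1 i : (1 <= i)%nat -> a i <= 1.
Proof.
  intros Hi. apply Rle_trans with (Tail a 1); [|rewrite <- Series_shift1; auto].
  apply Tail_ge_term; auto; [intros; left; apply a_pos; lia|apply ex_tail_a; lia].
Qed.

Lemma a_small c N : 0 < c -> exists i, (N <= i)%nat /\ (1 <= i)%nat /\ a i < c.
Proof.
  intros Hc. pose proof (ex_series_lim_0 _ a_summable) as L. apply is_lim_seq_spec in L.
  destruct (L (mkposreal c Hc)) as [M HM]. exists (M + N + 1)%nat. split; [lia|]. split; [lia|].
  specialize (HM (M + N)%nat ltac:(lia)). simpl in HM. rewrite Rminus_0_r in HM.
  apply Rabs_def2 in HM. lra.
Qed.

Lemma dI_pred k : (1 <= k)%nat -> dI a (k - 1) = a k + dI a k.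
Proof.
  intros Hk. unfold dI. change (Tail a (k - 1 + 1) = a k + Tail a (k + 1)).
  replace (k - 1 + 1)%nat with k by lia. rewrite Nat.add_1_r.
  apply Tail_first, ex_tail_a; auto.
Qed.

Lemma sI_pred k : (1 <= k)%nat -> sI a (k - 1) = eta (a k) + sI a k.
Proof.
  intros Hk. unfold sI.
  change (Tail (fun i => eta (a i)) (k - 1 + 1) = eta (a k) + Tail (fun i => eta (a i)) (k + 1)).
  replace (k - 1 + 1)%nat with k by lia. rewrite Nat.add_1_r.
  apply (Tail_first (fun i => eta (a i))), ex_tail_eta; auto.
Qed.

Lemma dI_pos k : 0 < dI a k.
Proof.
  change (0 < Tail a (k + 1)). apply Rlt_le_trans with (a (k + 1)%nat); [apply a_pos; lia|].
  apply Tail_ge_term; auto; [intros; left; apply a_pos; lia|apply ex_tail_a; lia].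
Qed.

Lemma bk_breakpoint k : (1 <= k)%nat -> bk a (dI a) (sI a) k = breakpoint k.
Proof.
  intros Hk. unfold bk, breakpoint. rewrite dI_pred, sI_pred by auto.
  rewrite eta_pos by (apply a_pos; auto). ring.
Qed.

Lemma breakpoint_succ k : breakpoint (k + 1) = sI a k + dI a k * ln (a (k + 1)%nat).
Proof.
  rewrite <- bk_breakpoint by lia. unfold bk. replace (k + 1 - 1)%nat with k by lia. reflexivity.
Qed.

Lemma breakpoint_antitone i j : (1 <= i <= j)%nat -> breakpoint j <= breakpoint i.
Proof.
  intros Hij. induction j as [|j IH]; [lia|].
  destruct (Nat.eq_dec i (S j)) as [->|Hne]; [lra|].
  apply Rle_trans with (breakpoint j); [|apply IH; lia].
  replace (S j) with (j + 1)%nat by lia. rewrite breakpoint_succ. unfold breakpoint.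
  assert (0 < dI a j) by apply dI_pos.
  assert (ln (a (j + 1)%nat) <= ln (a j)) by (apply ln_le; [apply a_pos; lia|apply a_step; lia]).
  nra.
Qed.

(* [b_k <= s_k], and [s_k] is the tail of a convergent series. *)
Lemma breakpoint_small b : 0 < b -> exists J, (2 <= J)%nat /\ breakpoint J <= b.
Proof.
  intros Hb. destruct (Tail_small (fun i => eta (a i))) with (eps := b) as [N HN]; auto.
  { apply (ex_series_incr_n _ 1), ex_tail_eta; lia. }
  exists (N + 2)%nat. split; [lia|].
  assert (0 < dI a (N + 2)) by apply dI_pos.
  assert (ln (a (N + 2)%nat) <= 0)
    by (rewrite <- ln_1; apply ln_le; [apply a_pos|apply a_le1]; lia).
  specialize (HN (N + 2 + 1)%nat ltac:(lia)). apply Rabs_def2 in HN.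
  unfold breakpoint. change (sI a (N + 2)) with (Tail (fun i => eta (a i)) (N + 2 + 1)). nra.
Qed.

Definition on_piece (b : R) (k : nat) : Prop :=
  (1 <= k)%nat /\ breakpoint (k + 1) <= b /\ ((2 <= k)%nat -> b < breakpoint k).

Lemma on_piece_exists b : 0 < b -> exists k, on_piece b k.
Proof.
  intros Hb. destruct (Rle_dec (breakpoint 2) b) as [Hle|Hlt].
  { exists 1%nat. repeat split; auto; lia. }
  destruct (breakpoint_small b Hb) as [J [HJ HBJ]].
  assert (Gen : forall t j, (j + t = J)%nat -> (2 <= j)%nat -> b < breakpoint j ->
    exists k, on_piece b k).
  { induction t as [|t IH]; intros j Hjt Hj Hbj.
    - rewrite Nat.add_0_r in Hjt. subst j. lra.
    - destruct (Rle_dec (breakpoint (j + 1)) b) as [Hle2|Hlt2].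
      + exists j. repeat split; auto; lia.
      + apply (IH (j + 1)%nat); lia || lra. }
  apply (Gen (J - 2)%nat 2%nat); lia || lra.
Qed.

Lemma indB_on_piece b k j : on_piece b k -> (1 <= j)%nat ->
  indB a (dI a) (sI a) j b = if Nat.eqb j k then 1 else 0.
Proof.
  intros [Hk [Hlo Hhi]] Hj. unfold indB.
  rewrite (bk_breakpoint (j + 1)), (bk_breakpoint j), bk_breakpoint by lia.
  destruct (Nat.eqb j k) eqn:Ejk.
  - apply Nat.eqb_eq in Ejk. subst j. destruct (Nat.eqb k 1) eqn:Ek.
    + apply Nat.eqb_eq in Ek. subst k.
      destruct (Rle_dec (breakpoint 2) b); [reflexivity|contradiction].
    + apply Nat.eqb_neq in Ek.
      destruct (Rle_dec (breakpoint (k + 1)) b); [|contradiction].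
      destruct (Rlt_dec b (breakpoint k)); [reflexivity|]. exfalso; apply n, Hhi; lia.
  - apply Nat.eqb_neq in Ejk. destruct (Nat.eqb j 1) eqn:Ej.
    + apply Nat.eqb_eq in Ej. subst j.
      destruct (Rle_dec (breakpoint 2) b) as [Hr|Hr]; [|reflexivity].
      pose proof (breakpoint_antitone 2 k ltac:(lia)).
      specialize (Hhi ltac:(lia)). lra.
    + destruct (Rle_dec (breakpoint (j + 1)) b) as [Hr|Hr]; [|reflexivity].
      destruct (Rlt_dec b (breakpoint j)) as [Hr2|Hr2]; [|reflexivity].
      exfalso. destruct (Compare_dec.le_lt_dec j k).
      * pose proof (breakpoint_antitone (j + 1) k ltac:(lia)).
        specialize (Hhi ltac:(lia)). lra.
      * pose proof (breakpoint_antitone (k + 1) j ltac:(lia)). lra.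
Qed.

Lemma z0_on_piece b k : on_piece b k ->
  z0I a b = INR k + dI a k * exp ((sI a k - b) / dI a k).
Proof.
  intros Hp. pose proof Hp as [Hk _]. unfold z0I.
  rewrite (Series_single _ (k - 1)).
  - unfold z0_term. replace (k - 1 + 1)%nat with k by lia.
    rewrite (indB_on_piece b k k), Nat.eqb_refl by auto. ring.
  - intros j Hj. unfold z0_term. rewrite (indB_on_piece b k (j + 1)) by (auto; lia).
    replace (Nat.eqb (j + 1) k) with false by (symmetry; apply Nat.eqb_neq; lia). ring.
Qed.

Lemma ex_tail_zeta c p : 0 < c -> (1 <= p)%nat -> ex_tail (zeta_term a c) p.
Proof.
  intros Hc Hp. apply (ex_tail_le _ (fun i => / c * a i)).
  - intros i Hi. pose proof (zeta_term_bounds a c i ltac:(apply a_pos; lia) Hc).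
    pose proof (Rmin_r 1 (/ c * a i)). lra.
  - apply (ex_series_scal_l _ _ (ex_tail_a p Hp)).
Qed.

Lemma ex_tail_phi c p : 0 < c -> (1 <= p)%nat -> ex_tail (phi_term a c) p.
Proof.
  intros Hc Hp. apply (ex_tail_le _ (fun i => Rabs (ln c) * a i + eta (a i))).
  - intros i Hi. split; [apply phi_term_nonneg|apply phi_term_le]; auto;
      try apply a_pos; try apply a_le1; lia.
  - apply (ex_series_plus _ _ (ex_series_scal_l _ _ (ex_tail_a p Hp)) (ex_tail_eta p Hp)).
Qed.

Lemma Phi_Zeta_on_piece k c : (1 <= k)%nat -> 0 < c -> a (k + 1)%nat <= c ->
  ((2 <= k)%nat -> c <= a k) ->
  Phi c = sI a k + dI a k * ln c /\ Zeta c = INR (k - 1) + dI a k / c.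
Proof.
  intros Hk Hc Hclo Hchi.
  assert (Hlow : forall i, (2 <= i <= k)%nat -> c <= a i).
  { intros i Hi. apply Rle_trans with (a k). apply Hchi; lia. apply a_antitone; lia. }
  assert (Hup : forall i, (k + 1 <= i)%nat -> a i <= c).
  { intros i Hi. apply Rle_trans with (a (k + 1)%nat); auto. apply a_antitone; lia. }
  change (dI a k) with (Tail a (k + 1)).
  change (sI a k) with (Tail (fun i => eta (a i)) (k + 1)). rewrite Nat.add_1_r. split.
  - unfold Phi. rewrite (Tail_split _ 2 k) by (try lia; apply ex_tail_phi; auto).
    rewrite sum_n_m_zero_loc.
    2:{ intros i Hi. unfold phi_term.
        rewrite level_of_le by (apply a_pos || apply Hlow; lia). ring. }
    rewrite (Tail_ext_loc _ (fun i => ln c * a i + eta (a i))).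
    2:{ intros i Hi. unfold phi_term. assert (0 < a i) by (apply a_pos; lia).
        rewrite level_of_ge by (auto; apply Hup; lia). rewrite eta_pos, ln_div by lra. ring. }
    rewrite Tail_plus, Tail_scal; [ring| |apply ex_tail_eta; lia].
    apply (ex_series_scal_l _ _ (ex_tail_a (S k) ltac:(lia))).
  - unfold Zeta. rewrite (Tail_split _ 2 k) by (try lia; apply ex_tail_zeta; auto).
    rewrite (sum_n_m_ext_loc (zeta_term a c) (fun _ => 1) 2 k)
      by (intros i Hi; apply zeta_term_of_le; (apply a_pos || apply Hlow); lia).
    rewrite (Tail_ext_loc (zeta_term a c) (fun i => / c * a i))
      by (intros i Hi; apply zeta_term_of_ge; (apply a_pos || apply Hup); lia).
    rewrite Tail_scal, sum_n_m_const. replace (S k - 2)%nat with (k - 1)%nat by lia.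
    unfold Rdiv. ring.
Qed.

Lemma is_level_on_piece b k : 0 < b -> on_piece b k -> is_level b (exp ((b - sI a k) / dI a k)).
Proof.
  intros Hb Hp. pose proof Hp as [Hk [Hlo Hhi]].
  set (c := exp ((b - sI a k) / dI a k)).
  assert (Hd : 0 < dI a k) by apply dI_pos.
  assert (Hc0 : 0 < c) by apply exp_pos.
  assert (Hlnc : ln c = (b - sI a k) / dI a k) by (unfold c; apply ln_exp).
  assert (Hclo : a (k + 1)%nat <= c).
  { rewrite breakpoint_succ in Hlo.
    rewrite <- (exp_ln (a (k + 1)%nat)) by (apply a_pos; lia). unfold c.
    apply exp_le_compat. apply Rcomplements.Rle_div_r; auto. lra. }
  assert (Hchi : (2 <= k)%nat -> c < a k).
  { intros Hk2. specialize (Hhi Hk2). unfold breakpoint in Hhi.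
    rewrite <- (exp_ln (a k)) by (apply a_pos; lia). unfold c.
    apply exp_increasing. apply Rcomplements.Rlt_div_l; auto. lra. }
  destruct (Phi_Zeta_on_piece k c Hk Hc0 Hclo (fun h => Rlt_le _ _ (Hchi h))) as [P Z].
  split; [auto|split].
  - rewrite P, Hlnc. field. lra.
  - rewrite (z0_on_piece b k), Z by auto.
    replace (exp ((sI a k - b) / dI a k)) with (/ c)
      by (unfold c; rewrite <- exp_Ropp; f_equal; field; lra).
    replace (INR k) with (1 + INR (k - 1))
      by (replace k with (S (k - 1)) at 2 by lia; rewrite S_INR; ring).
    unfold Rdiv. ring.
Qed.

Lemma level_exists b : 0 < b -> exists c, is_level b c.
Proof.
  intros Hb. destruct (on_piece_exists b Hb) as [k Hk].
  eexists. apply (is_level_on_piece b k Hb Hk).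
Qed.

Lemma Tail_exp_sub_tangent c z : 0 < c ->
  ex_tail (fun i => a i * z i) 2 -> ex_tail (fun i => exp (- z i)) 2 ->
  ex_tail (fun i => tangent_gap (a i) c (z i)) 2 /\
  Tail (fun i => exp (- z i)) 2 - (Zeta c - / c * (Tail (fun i => a i * z i) 2 - Phi c))
  = Tail (fun i => tangent_gap (a i) c (z i)) 2.
Proof.
  intros Hc E1 E2.
  assert (Eq : forall i, tangent_gap (a i) c (z i)
                 = (exp (- z i) - zeta_term a c i) + / c * (a i * z i - phi_term a c i))
    by (intros; apply tangent_gap_split).
  assert (X1 : ex_tail (fun i => exp (- z i) - zeta_term a c i) 2)
    by (apply (ex_series_minus _ _ E2), ex_tail_zeta; auto).
  assert (X2 : ex_tail (fun i => a i * z i - phi_term a c i) 2)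
    by (apply (ex_series_minus _ _ E1), ex_tail_phi; auto).
  assert (X3 : ex_tail (fun i => / c * (a i * z i - phi_term a c i)) 2)
    by (apply (ex_series_scal_l _ _ X2)).
  split.
  - apply (ex_series_ext (fun j => (exp (- z (2 + j)%nat) - zeta_term a c (2 + j))
                                   + / c * (a (2 + j)%nat * z (2 + j)%nat - phi_term a c (2 + j))));
      [intros; rewrite Eq; auto|].
    apply (ex_series_plus _ _ X1 X3).
  - rewrite (Tail_ext_loc _ _ 2 (fun i _ => Eq i)), Tail_plus, Tail_scal by auto.
    rewrite (Tail_minus (fun i => exp (- z i))), (Tail_minus (fun i => a i * z i))
      by (auto; apply ex_tail_zeta || apply ex_tail_phi; auto).
    unfold Zeta, Phi. ring.
Qed.

Lemma Tail_exp_ge_tangent c z : 0 < c -> (forall i, (2 <= i)%nat -> 0 <= z i) ->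
  ex_tail (fun i => a i * z i) 2 -> ex_tail (fun i => exp (- z i)) 2 ->
  Zeta c - / c * (Tail (fun i => a i * z i) 2 - Phi c) <= Tail (fun i => exp (- z i)) 2.
Proof.
  intros Hc Hz E1 E2. destruct (Tail_exp_sub_tangent c z Hc E1 E2) as [Ex Eq].
  assert (0 <= Tail (fun i => tangent_gap (a i) c (z i)) 2).
  { apply Tail_nonneg; auto. intros i Hi. apply tangent_gap_nonneg; auto. apply a_pos; lia. }
  lra.
Qed.

Lemma Tail_exp_gt_tangent c z j : 0 < c -> (forall i, (2 <= i)%nat -> 0 <= z i) ->
  ex_tail (fun i => a i * z i) 2 -> ex_tail (fun i => exp (- z i)) 2 ->
  (2 <= j)%nat -> z j <> level a c j ->
  Zeta c - / c * (Tail (fun i => a i * z i) 2 - Phi c) < Tail (fun i => exp (- z i)) 2.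
Proof.
  intros Hc Hz E1 E2 Hj Hne. destruct (Tail_exp_sub_tangent c z Hc E1 E2) as [Ex Eq].
  assert (tangent_gap (a j) c (z j) <= Tail (fun i => tangent_gap (a i) c (z i)) 2).
  { apply (Tail_ge_term (fun i => tangent_gap (a i) c (z i))); auto.
    intros i Hi. apply tangent_gap_nonneg; auto. apply a_pos; lia. }
  assert (0 < tangent_gap (a j) c (z j)) by (apply tangent_gap_pos; auto; apply a_pos; lia).
  lra.
Qed.

Lemma Phi_slope c c' i0 : 0 < c -> c <= c' -> (2 <= i0)%nat -> a i0 <= c ->
  a i0 * ln (c' / c) <= Phi c' - Phi c.
Proof.
  intros Hc Hcc Hi0 Ha. assert (Hai : 0 < a i0) by (apply a_pos; lia).
  unfold Phi. rewrite <- Tail_minus by (apply ex_tail_phi; auto; lra).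
  replace (a i0 * ln (c' / c)) with (phi_term a c' i0 - phi_term a c i0).
  - apply (Tail_ge_term (fun i => phi_term a c' i - phi_term a c i)); auto.
    + intros k Hk. pose proof (phi_term_le_mono a c k ltac:(apply a_pos; lia) c' Hc Hcc). lra.
    + apply (ex_series_minus (fun j => phi_term a c' (2 + j)) (fun j => phi_term a c (2 + j)));
        apply ex_tail_phi; auto; lra.
  - unfold phi_term. rewrite !level_of_ge, !ln_div by lra. ring.
Qed.

Lemma Phi_le_mono c c' : 0 < c -> c <= c' -> Phi c <= Phi c'.
Proof.
  intros Hc Hcc. unfold Phi. apply Tail_le; [|apply ex_tail_phi; auto; lra..].
  intros; apply phi_term_le_mono; auto. apply a_pos; lia.
Qed.

Lemma Phi_lt_mono c c' : 0 < c -> c < c' -> Phi c < Phi c'.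
Proof.
  intros Hc Hcc. destruct (a_small c 2 Hc) as [i0 [Hi0 [_ Ha]]].
  pose proof (Phi_slope c c' i0 Hc (Rlt_le _ _ Hcc) Hi0 (Rlt_le _ _ Ha)).
  assert (0 < a i0) by (apply a_pos; lia).
  assert (0 < ln (c' / c))
    by (rewrite <- ln_1; apply ln_increasing; [lra|apply Rcomplements.Rlt_div_r; lra]).
  nra.
Qed.

Lemma Phi_pos c : 0 < c -> 0 < Phi c.
Proof.
  intros Hc. destruct (a_small c 2 Hc) as [i0 [Hi0 [_ Ha]]].
  assert (0 < a i0) by (apply a_pos; lia).
  apply Rlt_le_trans with (phi_term a c i0).
  - unfold phi_term. rewrite level_of_ge by lra. apply Rmult_lt_0_compat; auto.
    rewrite <- ln_1. apply ln_increasing; [lra|apply Rcomplements.Rlt_div_r; lra].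
  - unfold Phi. apply Tail_ge_term; auto; [|apply ex_tail_phi; auto].
    intros; apply phi_term_nonneg, a_pos; lia.
Qed.

Lemma Zeta_nonneg c : 0 < c -> 0 <= Zeta c.
Proof.
  intros Hc. unfold Zeta. apply Tail_nonneg; [|apply ex_tail_zeta; auto].
  intros i Hi. apply zeta_term_bounds; auto. apply a_pos; lia.
Qed.

Lemma is_level_unique b c c' : is_level b c -> is_level b c' -> c = c'.
Proof.
  intros [H1 [H2 H3]] [H1' [H2' H3']].
  destruct (Rtotal_order c c') as [Hl|[He|Hg]]; auto.
  - pose proof (Phi_lt_mono c c' H1 Hl). lra.
  - pose proof (Phi_lt_mono c' c H1' Hg). lra.
Qed.

Lemma is_level_lt b b' c c' : b < b' -> is_level b c -> is_level b' c' -> c < c'.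
Proof.
  intros Hb [H1 [H2 H3]] [H1' [H2' H3']].
  destruct (Rlt_or_le c c') as [Hl|Hg]; auto.
  pose proof (Phi_le_mono c' c H1' Hg). lra.
Qed.

Lemma is_level_of_Phi b c : 0 < b -> 0 < c -> Phi c = b -> is_level b c.
Proof.
  intros Hb Hc P. destruct (level_exists b Hb) as [c' Hc'].
  replace c with c'; auto. destruct Hc' as [Hc1' [P' _]].
  destruct (Rtotal_order c c') as [Hl|[He|Hg]]; auto.
  - pose proof (Phi_lt_mono c c' Hc Hl). lra.
  - pose proof (Phi_lt_mono c' c Hc1' Hg). lra.
Qed.

Lemma z0_ge1 b c : is_level b c -> 1 <= z0I a b.
Proof. intros [Hc [_ ->]]. pose proof (Zeta_nonneg c Hc). lra. Qed.

Lemma ex_tail_level c : 0 < c ->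
  ex_tail (fun i => a i * level a c i) 2 /\ ex_tail (fun i => exp (- level a c i)) 2.
Proof.
  intros Hc. split; [apply (ex_tail_phi c 2); auto|].
  apply (ex_series_ext (fun j => zeta_term a c (2 + j))); [|apply ex_tail_zeta; auto].
  intros; symmetry; apply exp_neg_level, a_pos; lia.
Qed.

Lemma z0_ge_tangent b b' c c' : is_level b c -> is_level b' c' ->
  z0I a b - (b' - b) / c <= z0I a b'.
Proof.
  intros [Hc0 [Pc Zc]] [Hc0' [Pc' Zc']].
  destruct (ex_tail_level c' Hc0') as [E1 E2].
  pose proof (Tail_exp_ge_tangent c (level a c') Hc0) as K.
  rewrite (Tail_ext_loc (fun i => exp (- level a c' i)) (zeta_term a c')) in K
    by (intros; apply exp_neg_level, a_pos; lia).
  fold (Zeta c') (phi_term a c') in K. fold (Phi c') in K.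
  rewrite Zc, Zc'. rewrite Pc, Pc' in K. unfold Rdiv.
  enough (Zeta c - / c * (b' - b) <= Zeta c') by lra.
  apply K; auto. intros i Hi. apply level_nonneg, a_pos; lia.
Qed.

(* Moving the single coordinate [i0] of the minimizer for [b] by [(b' - b) / a_i0] gives a
   feasible point for [b'] whose cost is explicit in [b'], so no series is differentiated. *)
Lemma z0_le_perturbed b b' c c' i0 : is_level b c -> is_level b' c' ->
  (2 <= i0)%nat -> a i0 < c -> Rabs (b' - b) < a i0 * ln (c / a i0) ->
  z0I a b' <= z0I a b + a i0 / c * (exp (- ((b' - b) / a i0)) - 1).
Proof.
  intros [Hc0 [Pc Zc]] [Hc0' [Pc' Zc']] Hi0 Hac Hbb.
  assert (Hai : 0 < a i0) by (apply a_pos; lia).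
  set (y0 := level a c i0). set (v := y0 + (b' - b) / a i0).
  assert (Hy0 : y0 = ln (c / a i0)) by (apply level_of_ge; lra).
  set (z := fun i => if Nat.eqb i i0 then v else level a c i).
  assert (Hv : 0 <= v).
  { assert (Rabs ((b' - b) / a i0) <= y0).
    { unfold Rdiv. rewrite Rabs_mult, Rabs_inv, (Rabs_right (a i0)) by lra.
      apply Rmult_le_reg_r with (a i0); auto. rewrite Rmult_assoc, Rinv_l, Hy0 by lra. lra. }
    pose proof (Rle_abs (- ((b' - b) / a i0))) as Hn. rewrite Rabs_Ropp in Hn. unfold v. lra. }
  destruct (ex_tail_level c Hc0) as [E1 E2].
  destruct (Tail_update (fun i => a i * level a c i) 2 i0 (a i0 * v) Hi0 E1) as [EA TA].
  destruct (Tail_update (fun i => exp (- level a c i)) 2 i0 (exp (- v)) Hi0 E2) as [EE TE].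
  assert (Ez1 : forall i, a i * z i = if Nat.eqb i i0 then a i0 * v else a i * level a c i).
  { intros i. unfold z. destruct (Nat.eqb i i0) eqn:E; auto. apply Nat.eqb_eq in E. subst; auto. }
  assert (Ez2 : forall i, exp (- z i) = if Nat.eqb i i0 then exp (- v) else exp (- level a c i)).
  { intros i. unfold z. destruct (Nat.eqb i i0); auto. }
  pose proof (Tail_exp_ge_tangent c' z Hc0') as K.
  rewrite (Tail_ext_loc (fun i => a i * z i) _ 2 (fun i _ => Ez1 i)), TA in K.
  rewrite (Tail_ext_loc (fun i => exp (- z i)) _ 2 (fun i _ => Ez2 i)), TE in K.
  rewrite (Tail_ext_loc (fun i => exp (- level a c i)) (zeta_term a c)) in K
    by (intros; apply exp_neg_level, a_pos; lia).
  fold (phi_term a c) (Zeta c) in K. fold (Phi c) in K.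
  rewrite exp_neg_level, Pc, Pc' in K by auto.
  replace (zeta_term a c i0) with (a i0 / c) in K
    by (rewrite zeta_term_of_ge by lra; unfold Rdiv; ring).
  replace (exp (- v)) with (a i0 / c * exp (- ((b' - b) / a i0))) in K.
  2:{ unfold v. rewrite Ropp_plus_distr, exp_plus, Hy0, exp_neg_ln_ratio by lra. reflexivity. }
  fold y0 in K. replace (b - a i0 * y0 + a i0 * v - b') with 0 in K by (unfold v; field; lra).
  rewrite Zc, Zc'.
  enough (Zeta c' - / c' * 0 <= Zeta c - a i0 / c + a i0 / c * exp (- ((b' - b) / a i0))) by lra.
  apply K.
  - intros i Hi. unfold z. destruct (Nat.eqb i i0); auto. apply level_nonneg, a_pos; lia.
  - apply (ex_series_ext _ _ (fun j => eq_sym (Ez1 (2 + j)%nat))). auto.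
  - apply (ex_series_ext _ _ (fun j => eq_sym (Ez2 (2 + j)%nat))). auto.
Qed.

Lemma z0_derivative b c : 0 < b -> is_level b c -> derivable_pt_lim (z0I a) b (- / c).
Proof.
  intros Hb Hc. pose proof Hc as [Hc0 _].
  destruct (a_small c 2 Hc0) as [i0 [Hi0 [_ Hac]]].
  assert (Hai : 0 < a i0) by (apply a_pos; lia).
  assert (Hy0 : 0 < a i0 * ln (c / a i0)).
  { apply Rmult_lt_0_compat; auto. rewrite <- ln_1.
    apply ln_increasing; [lra|apply Rcomplements.Rlt_div_r; lra]. }
  apply (derivable_pt_lim_squeeze (z0I a) (fun t => z0I a b + a i0 / c * (exp (- ((t - b) / a i0)) - 1))
           b (- / c) (Rmin b (a i0 * ln (c / a i0)))).
  - apply Rmin_pos; auto.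
  - rewrite Rminus_diag. unfold Rdiv at 2. rewrite Rmult_0_l, Ropp_0, exp_0. ring.
  - apply is_derive_Reals. auto_derive; auto.
    replace (- ((b + - b) * / a i0)) with 0 by ring. rewrite exp_0. field. split; lra.
  - intros y Hy. pose proof (Rmin_l b (a i0 * ln (c / a i0))).
    pose proof (Rmin_r b (a i0 * ln (c / a i0))).
    assert (Hy0' : 0 < y) by (unfold Rabs in Hy; destruct (Rcase_abs _); lra).
    destruct (level_exists y Hy0') as [c' Hc']. split.
    + pose proof (z0_ge_tangent b y c c' Hc Hc'). unfold Rdiv in *. lra.
    + apply (z0_le_perturbed b y c c' i0); auto. lra.
Qed.

Lemma Derive_z0 b c : 0 < b -> is_level b c -> Derive (z0I a) b = - / c.
Proof. intros. apply is_derive_unique, is_derive_Reals, z0_derivative; auto. Qed.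

Lemma Psi_pos c : 0 < c -> 0 < Psi c.
Proof. intros Hc. unfold Psi. pose proof (Zeta_nonneg c Hc). nra. Qed.

Lemma Psi_lt_mono c c' : 0 < c -> c < c' -> Psi c < Psi c'.
Proof.
  intros Hc Hcc. unfold Psi, Zeta. rewrite !Rmult_plus_distr_l, !Rmult_1_r, <- !Tail_scal.
  enough (Tail (fun i => c * zeta_term a c i) 2 <= Tail (fun i => c' * zeta_term a c' i) 2) by lra.
  apply Tail_le.
  - intros k Hk. apply scaled_zeta_term_le_mono; try lra. apply a_pos; lia.
  - apply (ex_series_scal_l _ _ (ex_tail_zeta c 2 Hc ltac:(lia))).
  - apply (ex_series_scal_l _ _ (ex_tail_zeta c' 2 ltac:(lra) ltac:(lia))).
Qed.

Lemma Psi_of_level b c : is_level b c -> c * z0I a b = Psi c.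
Proof. intros [_ [_ ->]]. reflexivity. Qed.

Lemma f_derivative th b c : 0 < b -> is_level b c -> derivable_pt_lim (fI a th) b (th - / Psi c).
Proof.
  intros Hb Hc. pose proof (z0_ge1 b c Hc). pose proof (proj1 Hc).
  rewrite <- (Psi_of_level b c Hc).
  replace (th - / (c * z0I a b)) with (th + (- / c) / z0I a b) by (field; lra).
  apply (derivable_pt_lim_affine_ln (z0I a)); [lra|]. apply z0_derivative; auto.
Qed.

Lemma Derive_f th b c : 0 < b -> is_level b c -> Derive (fI a th) b = th - / Psi c.
Proof. intros. apply is_derive_unique, is_derive_Reals, f_derivative; auto. Qed.

Lemma Derive_f_spec th b : 0 < b -> derivable_pt_lim (fI a th) b (Derive (fI a th) b).
Proof.
  intros Hb. destruct (level_exists b Hb) as [c Hc].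
  rewrite (Derive_f th b c) by auto. apply f_derivative; auto.
Qed.

Lemma f_continuous th b : 0 < b -> continuity_pt (fI a th) b.
Proof.
  intros Hb. apply derivable_continuous_pt. exists (Derive (fI a th) b). apply Derive_f_spec; auto.
Qed.

(* [- ln c] as a function of [b]: Lipschitz near [b] by [Phi_slope], with an [a_i0] below
   the level at [b / 2]. *)
Definition log_inv_level (b : R) : R := ln (- Derive (z0I a) b).

Lemma log_inv_level_eq b c : 0 < b -> is_level b c -> log_inv_level b = - ln c.
Proof.
  intros Hb Hc. unfold log_inv_level. rewrite (Derive_z0 b c), Ropp_involutive by auto.
  apply ln_Rinv, (proj1 Hc).
Qed.

Lemma log_inv_level_lipschitz b : 0 < b -> exists K, 0 < K /\
  forall y, Rabs (y - b) < b / 2 -> Rabs (log_inv_level y - log_inv_level b) <= K * Rabs (y - b).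
Proof.
  intros Hb. destruct (level_exists (b / 2) ltac:(lra)) as [c2 Hc2].
  destruct (a_small c2 2 (proj1 Hc2)) as [i0 [Hi0 [_ Ha]]].
  assert (Hai : 0 < a i0) by (apply a_pos; lia).
  assert (Hone : forall u v c c', b / 2 < u -> u < v -> is_level u c -> is_level v c' ->
            a i0 * (ln c' - ln c) <= v - u).
  { intros u v c c' Hu Hl Hc Hc'. pose proof (proj1 Hc) as Hc0.
    pose proof (is_level_lt u v c c' Hl Hc Hc') as Hcc.
    pose proof (is_level_lt (b / 2) u c2 c Hu Hc2 Hc).
    pose proof (Phi_slope c c' i0 Hc0 (Rlt_le _ _ Hcc) Hi0 ltac:(lra)) as Hs.
    destruct Hc as [_ [P1 _]]. destruct Hc' as [_ [P2 _]].
    rewrite P1, P2, ln_div in Hs by lra. lra. }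
  exists (/ a i0). split; [apply Rinv_0_lt_compat; auto|].
  intros y Hy. assert (Hyb : b / 2 < y) by (unfold Rabs in Hy; destruct (Rcase_abs _); lra).
  destruct (level_exists b Hb) as [c Hc]. destruct (level_exists y ltac:(lra)) as [c' Hc'].
  rewrite (log_inv_level_eq b c), (log_inv_level_eq y c') by (auto; lra).
  pose proof (proj1 Hc). pose proof (proj1 Hc').
  assert (Hkey : a i0 * Rabs (ln c' - ln c) <= Rabs (y - b)).
  { destruct (Rtotal_order b y) as [Hl|[He|Hg]].
    - pose proof (Hone b y c c' ltac:(lra) Hl Hc Hc'). pose proof (is_level_lt b y c c' Hl Hc Hc').
      assert (ln c < ln c') by (apply ln_increasing; lra).
      rewrite !Rabs_right by lra. lra.
    - subst y. rewrite (is_level_unique b c c' Hc Hc'), !Rminus_diag, Rabs_R0. lra.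
    - pose proof (Hone y b c' c Hyb Hg Hc' Hc). pose proof (is_level_lt y b c' c Hg Hc' Hc).
      assert (ln c' < ln c) by (apply ln_increasing; lra).
      rewrite !Rabs_left by lra. lra. }
  replace (- ln c' - - ln c) with (- (ln c' - ln c)) by ring. rewrite Rabs_Ropp.
  apply Rmult_le_reg_l with (a i0); auto. rewrite <- Rmult_assoc, Rinv_r, Rmult_1_l by lra. lra.
Qed.

Lemma Derive_f_continuous th b : 0 < b -> continuity_pt (Derive (fI a th)) b.
Proof.
  intros Hb. destruct (level_exists b Hb) as [c Hc].
  set (F := fun t => th - exp (log_inv_level t) / z0I a t).
  apply (continuity_pt_loc_eq F _ b b Hb).
  - intros y Hy. assert (Hy0 : 0 < y) by (unfold Rabs in Hy; destruct (Rcase_abs _); lra).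
    destruct (level_exists y Hy0) as [c' Hc'].
    unfold F. rewrite (Derive_f th y c'), (log_inv_level_eq y c') by auto.
    rewrite <- (Psi_of_level y c' Hc').
    pose proof (proj1 Hc'). pose proof (z0_ge1 y c' Hc').
    rewrite exp_Ropp, exp_ln by auto. field. lra.
  - unfold F. apply (continuity_pt_minus (fun _ => th)); [apply continuity_pt_const; intros ? ?; auto|].
    apply (continuity_pt_div (comp exp log_inv_level) (z0I a)).
    + apply continuity_pt_comp; [|apply derivable_continuous_pt, derivable_pt_exp].
      destruct (log_inv_level_lipschitz b Hb) as [K [HK HL]].
      apply (continuity_pt_lipschitz _ b (b / 2) K); auto; lra.
    + apply derivable_continuous_pt. exists (- / c). apply z0_derivative; auto.
    + pose proof (z0_ge1 b c Hc). lra.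
Qed.

Lemma f_mean_value th x y : 0 < x < y ->
  exists xi, x < xi < y /\ fI a th y - fI a th x = Derive (fI a th) xi * (y - x).
Proof.
  intros Hxy. apply mean_value_right_cont; [lra| | |apply right_limit_of_continuity_pt, f_continuous; lra].
  - intros c Hc. apply Derive_f_spec; lra.
  - intros c Hc. apply f_continuous; lra.
Qed.

Lemma Derive_f_nondecreasing th u v : 0 < u -> u <= v -> Derive (fI a th) u <= Derive (fI a th) v.
Proof.
  intros Hu [Huv|<-]; [|lra].
  destruct (level_exists u Hu) as [cu Hcu]. destruct (level_exists v ltac:(lra)) as [cv Hcv].
  rewrite (Derive_f th u cu), (Derive_f th v cv) by (auto; lra).
  pose proof (Psi_lt_mono cu cv (proj1 Hcu) (is_level_lt u v cu cv Huv Hcu Hcv)).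
  pose proof (Psi_pos cu (proj1 Hcu)).
  apply Rplus_le_compat_l, Ropp_le_contravar, Rinv_le_contravar; lra.
Qed.

Lemma f_convex th : convex_on (fun b => 0 < b) (fI a th).
Proof.
  apply (convex_on_of_deriv_nondecreasing _ _ (Derive (fI a th))).
  - intros x c Hx Hc. apply Derive_f_spec; lra.
  - intros x c Hx Hc. apply f_continuous; lra.
  - intros x Hx. apply right_limit_of_continuity_pt, f_continuous; auto.
  - intros x u v Hx Hu Huv. apply Derive_f_nondecreasing; lra.
Qed.

Lemma f_pos th b : 0 < th -> 0 < b -> 0 < fI a th b.
Proof.
  intros Hth Hb. destruct (level_exists b Hb) as [c Hc]. pose proof (z0_ge1 b c Hc).
  unfold fI. assert (0 <= ln (z0I a b)) by (rewrite <- ln_1; apply ln_le; lra). nra.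
Qed.

Lemma f_to_p_infty th : 0 < th -> filterlim (fI a th) (Rbar_locally p_infty) (Rbar_locally p_infty).
Proof.
  intros Hth. apply (filterlim_affine_ln_p_infty (z0I a)); auto.
  intros b Hb. destruct (level_exists b Hb) as [c Hc]. apply (z0_ge1 b c Hc).
Qed.

Lemma level_lt_of_lt_Phi c0 b c : 0 < c0 -> b < Phi c0 -> is_level b c -> c < c0.
Proof.
  intros Hc0 Hb Hc. destruct (Rlt_or_le c c0) as [Hl|Hl]; auto.
  destruct Hc as [Hc1 [Pc _]]. pose proof (Phi_le_mono c0 c Hc0 Hl). lra.
Qed.

Lemma at_right0_of_level_lt c0 (P : R -> Prop) : 0 < c0 ->
  (forall b c, 0 < b -> is_level b c -> c < c0 -> P b) -> at_right 0 P.
Proof.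
  intros Hc0 H. exists (mkposreal _ (Phi_pos c0 Hc0)). intros b Hb Hb0. simpl in Hb.
  unfold ball in Hb; simpl in Hb; unfold AbsRing_ball, abs, minus, plus, opp in Hb; simpl in Hb.
  rewrite Ropp_0, Rplus_0_r, Rabs_right in Hb by lra.
  destruct (level_exists b Hb0) as [c Hc]. apply (H b c); auto.
  apply (level_lt_of_lt_Phi c0 b c Hc0 Hb Hc).
Qed.

(* Below [a_N], the first [N - 1] terms of [Zeta c] equal [1]. *)
Lemma Zeta_ge_of_lt N c : (2 <= N)%nat -> 0 < c -> c < a N -> INR N - 1 <= Zeta c.
Proof.
  intros HN Hc HcN. unfold Zeta.
  rewrite (Tail_split _ 2 N) by (try lia; apply ex_tail_zeta; auto).
  rewrite (sum_n_m_ext_loc (zeta_term a c) (fun _ => 1)).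
  - rewrite sum_n_m_const. replace (S N - 2)%nat with (N - 1)%nat by lia.
    rewrite minus_INR by lia. simpl.
    assert (0 <= Tail (zeta_term a c) (S N)).
    { apply Tail_nonneg; [|apply ex_tail_zeta; auto; lia].
      intros; apply zeta_term_bounds; auto; apply a_pos; lia. }
    lra.
  - intros i Hi. apply zeta_term_of_le; [apply a_pos; lia|].
    left. apply Rlt_le_trans with (a N); auto. apply a_antitone; lia.
Qed.

Lemma f_to_p_infty_at0 th : 0 < th -> filterlim (fI a th) (at_right 0) (Rbar_locally p_infty).
Proof.
  intros Hth P [M HM].
  destruct (INR_unbounded (exp M)) as [N0 HN0]. set (N := (N0 + 2)%nat).
  assert (HN : exp M < INR N) by (unfold N; rewrite plus_INR; simpl; lra).
  apply (at_right0_of_level_lt (a N)); [apply a_pos; unfold N; lia|].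
  intros b c Hb Hc HcN. apply HM.
  pose proof (Zeta_ge_of_lt N c ltac:(unfold N; lia) (proj1 Hc) HcN).
  destruct Hc as [_ [_ Zc]]. unfold fI. rewrite Zc.
  assert (M < ln (1 + Zeta c)) by (rewrite <- (ln_exp M); apply ln_increasing; [apply exp_pos|lra]).
  nra.
Qed.

(* [Psi c = c + sum_i min(c, a_i)]: bound [N] terms by [c] and the rest by the tail of [a]. *)
Lemma Psi_small eps : 0 < eps -> exists c0, 0 < c0 /\ forall c, 0 < c < c0 -> Psi c < eps.
Proof.
  intros Heps. destruct (Tail_small a) with (eps := eps / 2) as [N0 HN0];
    [apply (ex_series_incr_n _ 1), ex_tail_a; lia|lra|].
  set (N := (N0 + 2)%nat). assert (HNR : 0 <= INR N) by apply pos_INR.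
  exists (eps / (2 * INR N + 2)). split; [apply Rdiv_lt_0_compat; lra|].
  intros c [Hcp Hcc]. unfold Psi, Zeta. rewrite Rmult_plus_distr_l, Rmult_1_r, <- Tail_scal.
  assert (Hex : ex_tail (fun i => c * zeta_term a c i) 2)
    by (apply (ex_series_scal_l _ _ (ex_tail_zeta c 2 Hcp ltac:(lia)))).
  rewrite (Tail_split _ 2 N) by (try (unfold N; lia); auto).
  assert (S1 : sum_n_m (fun i => c * zeta_term a c i) 2 N <= INR N * c).
  { apply Rle_trans with (sum_n_m (fun _ => c) 2 N).
    - apply sum_n_m_le_loc. intros k Hk.
      pose proof (zeta_term_bounds a c k ltac:(apply a_pos; lia) Hcp).
      pose proof (Rmin_l 1 (/ c * a k)). nra.
    - rewrite sum_n_m_const. replace (S N - 2)%nat with (N - 1)%nat by (unfold N; lia).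
      rewrite minus_INR by (unfold N; lia). simpl. nra. }
  assert (S2 : Tail (fun i => c * zeta_term a c i) (S N) <= Tail a (S N)).
  { apply Tail_le; [|apply (ex_tail_shift (fun i => c * zeta_term a c i) 2); auto; unfold N; lia
                 |apply ex_tail_a; lia].
    intros i Hi. pose proof (zeta_term_bounds a c i ltac:(apply a_pos; lia) Hcp).
    pose proof (Rmin_r 1 (/ c * a i)).
    replace (a i) with (c * (/ c * a i)) by (field; lra). apply Rmult_le_compat_l; lra. }
  specialize (HN0 (S N) ltac:(unfold N; lia)).
  assert (Tail a (S N) < eps / 2) by (apply Rabs_def2 in HN0; lra).
  assert (c * (INR N + 1) < eps / 2).
  { apply Rlt_le_trans with (eps / (2 * INR N + 2) * (INR N + 1)); [apply Rmult_lt_compat_r; lra|].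
    right. field. lra. }
  nra.
Qed.

Lemma Derive_f_to_m_infty_at0 th : 0 < th ->
  filterlim (Derive (fI a th)) (at_right 0) (Rbar_locally m_infty).
Proof.
  intros Hth P [M HM].
  set (K := Rmax 1 (th - M)). pose proof (Rmax_l 1 (th - M)). pose proof (Rmax_r 1 (th - M)).
  destruct (Psi_small (/ K) ltac:(apply Rinv_0_lt_compat; unfold K; lra)) as [c0 [Hc0 Hsmall]].
  apply (at_right0_of_level_lt c0); auto. intros b c Hb Hc Hcc. apply HM.
  pose proof (proj1 Hc) as Hcp. rewrite (Derive_f th b c) by auto.
  pose proof (Hsmall c (conj Hcp Hcc)) as HP. pose proof (Psi_pos c Hcp).
  apply Rinv_lt_contravar in HP; [|nra]. rewrite Rinv_inv in HP. unfold K in HP. lra.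
Qed.

Definition optimal_level (th : R) (m : nat) : R := (1 - th * dI a m) / (th * INR m).

Lemma mI_bounds th m : 0 < th -> is_mI a th m ->
  (1 <= m)%nat /\ 0 < 1 - th * dI a m /\
  a (m + 1)%nat < optimal_level th m /\ ((2 <= m)%nat -> optimal_level th m <= a m).
Proof.
  intros Hth Hm. unfold optimal_level.
  destruct Hm as [[H1 ->]|[H1 [Hm1 [Hm2 Hm3]]]].
  - apply Rlt_inv_iff in H1; [|apply dI_pos].
    pose proof (dI_pred 1 ltac:(lia)) as E. simpl in E.
    assert (0 < a 1%nat) by (apply a_pos; lia). assert (a 2%nat <= a 1%nat) by (apply (a_step 1%nat); lia).
    assert (0 < dI a 1) by apply dI_pos.
    split; [lia|]. split; [nra|]. split; [|intros; lia].
    simpl INR. rewrite Rmult_1_r. apply Rcomplements.Rlt_div_r; [lra|]. simpl. nra.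
  - assert (HmR : 1 <= INR m) by (replace 1 with (INR 1) by reflexivity; apply le_INR; lia).
    pose proof (dI_pred (m + 1) ltac:(lia)) as E. replace (m + 1 - 1)%nat with m in E by lia.
    assert (HT : th * (dI a (m + 1) + INR (m + 1) * a (m + 1)%nat) < 1).
    { destruct (Rlt_or_le (th * (dI a (m + 1) + INR (m + 1) * a (m + 1)%nat)) 1) as [Hl|Hl];
        [exact Hl|].
      exfalso. apply (proj2 (Rge_inv_iff th _ Hth)) in Hl. specialize (Hm3 (m + 1)%nat ltac:(lia) Hl).
      lia. }
    rewrite plus_INR in HT. simpl INR in HT.
    assert (0 < a (m + 1)%nat) by (apply a_pos; lia).
    assert (0 < dI a (m + 1)) by apply dI_pos.
    assert (0 <= th * INR m * a (m + 1)%nat) by (apply Rmult_le_pos; [apply Rmult_le_pos|]; lra).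
    assert (HT2 : th * (INR m * a (m + 1)%nat + dI a m) < 1) by (rewrite E; nra).
    split; [auto|]. split; [nra|]. split.
    + apply Rcomplements.Rlt_div_r; nra.
    + intros _. apply Rcomplements.Rle_div_l; [nra|]. apply Rge_inv_iff in Hm2; auto. nra.
Qed.

Lemma Derive_f_pos th b c : 0 < th -> 0 < b -> is_level b c -> 1 / th < Psi c ->
  0 < Derive (fI a th) b.
Proof.
  intros Hth Hb Hc HP. rewrite (Derive_f th b c) by auto. apply sub_inv_pos; auto.
Qed.

Lemma Derive_f_neg th b c : 0 < th -> 0 < b -> is_level b c -> Psi c < 1 / th ->
  Derive (fI a th) b < 0.
Proof.
  intros Hth Hb Hc HP. rewrite (Derive_f th b c) by auto.
  apply sub_inv_neg; auto. apply Psi_pos, (proj1 Hc).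
Qed.

Lemma f_strict_min th m : 0 < th -> is_mI a th m ->
  let cs := optimal_level th m in
  let bs := sI a m + dI a m * ln cs in
  0 < bs /\ is_level bs cs /\ Psi cs = 1 / th /\
  forall b, 0 < b -> b <> bs -> fI a th bs < fI a th b.
Proof.
  intros Hth Hm cs bs.
  destruct (mI_bounds th m Hth Hm) as [Hm1 [Hpos [Hlo Hhi]]]. fold cs in Hlo, Hhi.
  assert (HmR : 1 <= INR m) by (replace 1 with (INR 1) by reflexivity; apply le_INR; lia).
  assert (Hcs0 : 0 < cs) by (unfold cs, optimal_level; apply Rdiv_lt_0_compat; nra).
  destruct (Phi_Zeta_on_piece m cs Hm1 Hcs0 (Rlt_le _ _ Hlo) Hhi) as [Pcs Zcs].
  assert (Hbs : 0 < bs) by (unfold bs; rewrite <- Pcs; apply Phi_pos; auto).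
  assert (Hcand : is_level bs cs) by (apply is_level_of_Phi; auto).
  assert (HPsi : Psi cs = 1 / th).
  { unfold Psi. rewrite Zcs, minus_INR by lia. unfold cs, optimal_level. simpl. field. split; lra. }
  split; [auto|]. split; [auto|]. split; [auto|].
  apply (strict_min_of_deriv_sign (fun b => 0 < b) _ (Derive (fI a th))); auto.
  - intros x y Hx Hxy. apply f_mean_value; lra.
  - intros x xi Hx Hxi. destruct (level_exists xi ltac:(lra)) as [c Hc].
    apply (Derive_f_neg th xi c); auto; [lra|].
    pose proof (Psi_lt_mono c cs (proj1 Hc) (is_level_lt xi bs c cs (proj2 Hxi) Hc Hcand)). lra.
  - intros xi Hxi. destruct (level_exists xi ltac:(lra)) as [c Hc].
    apply (Derive_f_pos th xi c); auto; [lra|].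
    pose proof (Psi_lt_mono cs c Hcs0 (is_level_lt bs xi cs c Hxi Hcand Hc)). lra.
Qed.

Lemma feasible_nonneg x : feasibleI a x -> forall i, (1 <= i)%nat -> 0 <= x i.
Proof.
  intros [H1 [H2 H3]] i Hi. induction i as [|i IH]; [lia|].
  destruct (Nat.eq_dec i 0) as [->|Hne]; [rewrite H1; lra|].
  apply Rle_trans with (x i); [apply IH; lia|].
  replace (S i) with (i + 1)%nat by lia. apply H2; lia.
Qed.

Lemma level_point_terms c b i : 0 < b -> (2 <= i)%nat ->
  exp (- b * level_point a c b i) = zeta_term a c i /\
  a i * level_point a c b i = / b * phi_term a c i.
Proof.
  intros Hb Hi. split.
  - rewrite <- Ropp_mult_distr_l, level_point_scaled by (lia || lra).
    apply exp_neg_level, a_pos; lia.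
  - unfold phi_term. rewrite <- (level_point_scaled a c b i) by (lia || lra). field. lra.
Qed.

Lemma level_point_feasible b c : 0 < b -> is_level b c -> feasibleI a (level_point a c b).
Proof.
  intros Hb [Hc [Pc Zc]]. split; [|split].
  - reflexivity.
  - intros i Hi. destruct (Nat.eq_dec i 1) as [->|Hi1].
    + unfold level_point at 2. simpl. apply Rdiv_le_0_compat; auto.
      apply level_nonneg, a_pos; lia.
    + unfold level_point. replace (Nat.eqb i 1) with false by (symmetry; apply Nat.eqb_neq; auto).
      replace (Nat.eqb (i + 1) 1) with false by (symmetry; apply Nat.eqb_neq; lia).
      unfold Rdiv. apply Rmult_le_compat_r; [left; apply Rinv_0_lt_compat; auto|].
      apply level_antitone; [apply a_pos; lia|apply a_step; lia].
  - assert (Ex : ex_tail (fun i => a i * level_point a c b i) 2).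
    { apply (ex_series_ext (fun j => / b * phi_term a c (2 + j))).
      - intros j. symmetry. apply level_point_terms; auto; lia.
      - apply (ex_series_scal_l _ _ (ex_tail_phi c 2 Hc ltac:(lia))). }
    assert (Ex1 : ex_tail (fun i => a i * level_point a c b i) 1)
      by (apply (ex_series_incr_1 (fun j => a (1 + j)%nat * level_point a c b (1 + j))); auto).
    assert (Hval : Series (fun j => a (j + 1)%nat * level_point a c b (j + 1)) = 1).
    { rewrite (Series_shift1 (fun i => a i * level_point a c b i)), Tail_first by auto.
      rewrite (Tail_ext_loc _ (fun i => / b * phi_term a c i))
        by (intros; apply level_point_terms; auto).
      rewrite Tail_scal. fold (Phi c). rewrite Pc. unfold level_point at 1. simpl. field. lra. }
    rewrite <- Hval. apply Series_correct.
    apply (ex_series_of_tail1 (fun i => a i * level_point a c b i)); auto.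
Qed.

Lemma obj_level_point b c : 0 < b -> 0 < c ->
  ex_series (objI_terms b (level_point a c b)) /\
  Series (objI_terms b (level_point a c b)) = 1 + Zeta c.
Proof.
  intros Hb Hc.
  assert (Ex : ex_tail (fun i => exp (- b * level_point a c b i)) 2).
  { apply (ex_series_ext (fun j => zeta_term a c (2 + j))); [|apply ex_tail_zeta; auto].
    intros j. symmetry. apply level_point_terms; auto; lia. }
  assert (Ex1 : ex_tail (fun i => exp (- b * level_point a c b i)) 1)
    by (apply (ex_series_incr_1 (fun j => exp (- b * level_point a c b (1 + j)))); auto).
  unfold objI_terms. split; [apply (ex_series_of_tail1 (fun i => exp (- b * level_point a c b i))); auto|].
  rewrite (Series_shift1 (fun i => exp (- b * level_point a c b i))), Tail_first by auto.
  unfold level_point at 1. simpl.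
  rewrite Rmult_0_r, exp_0. f_equal.
  unfold Zeta. apply Tail_ext_loc. intros; apply level_point_terms; auto.
Qed.

Lemma minimizer_eq_level_point b c x : 0 < b -> is_level b c -> minimizerI a b x ->
  forall i, (1 <= i)%nat -> x i = level_point a c b i.
Proof.
  intros Hb Hc [Hf [Hex Hmin]] i Hi. pose proof Hc as [Hc0 [Pc Zc]].
  destruct (Nat.eq_dec i 1) as [->|Hi1]; [apply Hf|].
  destruct (Req_dec (x i) (level_point a c b i)) as [E|Hne]; auto. exfalso.
  destruct (obj_level_point b c Hb Hc0) as [Exc Sc].
  pose proof (Hmin _ (level_point_feasible b c Hb Hc) Exc) as Hle. rewrite Sc in Hle.
  pose proof (feasible_nonneg x Hf) as Hnn.
  destruct Hf as [Hx1 [_ Hsum]].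
  assert (Exs : ex_tail (fun i => a i * x i) 1)
    by (apply (ex_series_of_tail1 (fun i => a i * x i)); exists 1; auto).
  assert (Ssum : Tail (fun i => a i * x i) 2 = 1).
  { pose proof (is_series_unique _ _ Hsum) as S1.
    rewrite (Series_shift1 (fun i => a i * x i)), Tail_first, Hx1, Rmult_0_r, Rplus_0_l in S1
      by auto.
    auto. }
  assert (Exo : ex_tail (fun i => exp (- b * x i)) 1)
    by (apply (ex_series_of_tail1 (fun i => exp (- b * x i))); auto).
  unfold objI_terms in Hle.
  rewrite (Series_shift1 (fun i => exp (- b * x i))), Tail_first, Hx1, Rmult_0_r, exp_0 in Hle
    by auto.
  assert (E1 : ex_tail (fun k => a k * (b * x k)) 2).
  { apply (ex_series_ext (fun j => b * (a (2 + j)%nat * x (2 + j)%nat))); [intros; change_eq_R; ring|].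
    apply (ex_series_scal_l b (fun j => a (2 + j)%nat * x (2 + j)%nat)).
    apply (ex_series_incr_1 (fun j => a (1 + j)%nat * x (1 + j)%nat)); auto. }
  assert (E2 : ex_tail (fun k => exp (- (b * x k))) 2).
  { apply (ex_series_ext (fun j => exp (- b * x (2 + j)%nat))); [intros; f_equal; ring|].
    apply (ex_series_incr_1 (fun j => exp (- b * x (1 + j)%nat))); auto. }
  assert (K : Zeta c - / c * (Tail (fun k => a k * (b * x k)) 2 - Phi c)
              < Tail (fun k => exp (- (b * x k))) 2).
  { apply (Tail_exp_gt_tangent c _ i); auto; [intros k Hk; apply Rmult_le_pos; [lra|apply Hnn; lia]|lia|].
    intros Habs. apply Hne. rewrite <- (level_point_scaled a c b i) in Habs by (lia || lra).
    apply Rmult_eq_reg_l in Habs; lra. }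
  rewrite (Tail_ext_loc (fun k => a k * (b * x k)) (fun k => b * (a k * x k))) in K by (intros; ring).
  rewrite Tail_scal, Ssum, Pc in K.
  rewrite (Tail_ext_loc (fun k => exp (- (b * x k))) (fun k => exp (- b * x k))) in K
    by (intros; f_equal; ring).
  replace (b * 1 - b) with 0 in K by ring. lra.
Qed.

Lemma f_at_optimum th m : 0 < th -> is_mI a th m ->
  fI a th (sI a m + dI a m * ln (optimal_level th m))
  = th * sI a m + eta (1 - th * dI a m) + (1 - th * dI a m) * ln (INR m) + dI a m * eta th.
Proof.
  intros Hth Hm. destruct (mI_bounds th m Hth Hm) as [Hm1 [Hpos _]].
  destruct (f_strict_min th m Hth Hm) as [Hbs [Hcand [HPsi _]]].
  set (cs := optimal_level th m) in *.
  assert (HmR : 1 <= INR m) by (replace 1 with (INR 1) by reflexivity; apply le_INR; lia).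
  pose proof (proj1 Hcand) as Hcs0.
  assert (Hz0 : z0I a (sI a m + dI a m * ln cs) = 1 / (th * cs)).
  { rewrite <- (Psi_of_level _ cs Hcand) in HPsi.
    apply Rmult_eq_reg_l with cs; [rewrite HPsi; field; split|]; lra. }
  unfold fI. rewrite Hz0, !eta_pos by (pose proof (dI_pos m); lra).
  assert (Lcs : ln cs = ln (1 - th * dI a m) - ln th - ln (INR m)).
  { unfold cs, optimal_level. rewrite ln_div, ln_mult by nra. ring. }
  unfold Rdiv. rewrite Rmult_1_l, ln_Rinv, ln_mult, Lcs by nra. ring.
Qed.

Lemma minimizer_at_optimum th m x : 0 < th -> is_mI a th m ->
  (forall b, 0 < b -> minimizerI a b (x b)) ->
  let bs := sI a m + dI a m * ln (optimal_level th m) in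
  (forall i, (1 <= i <= m)%nat -> x bs i = 0) /\
  (forall i, (m < i)%nat -> x bs i = 1 / bs * ln ((1 - th * dI a m) / (a i * th * INR m))) /\
  (forall i, (1 <= i)%nat -> x bs i = level_point a (optimal_level th m) bs i).
Proof.
  intros Hth Hm Hmin bs. destruct (mI_bounds th m Hth Hm) as [Hm1 [Hpos [Hlo Hhi]]].
  destruct (f_strict_min th m Hth Hm) as [Hbs [Hcand _]]. fold bs in Hbs, Hcand.
  set (cs := optimal_level th m) in *.
  assert (HmR : 1 <= INR m) by (replace 1 with (INR 1) by reflexivity; apply le_INR; lia).
  pose proof (minimizer_eq_level_point bs cs (x bs) Hbs Hcand (Hmin bs Hbs)) as Hx.
  split; [|split; auto].
  - intros i Hi. rewrite Hx by lia. destruct (Nat.eq_dec i 1) as [->|Hi1]; [reflexivity|].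
    apply level_point_of_le; [apply a_pos; lia|].
    apply Rle_trans with (a m); [apply Hhi; lia|apply a_antitone; lia].
  - intros i Hi. assert (0 < a i) by (apply a_pos; lia).
    assert (a i <= cs) by (apply Rle_trans with (a (m + 1)%nat); [apply a_antitone; lia|lra]).
    rewrite Hx, level_point_of_ge by (auto; lia).
    replace ((1 - th * dI a m) / (a i * th * INR m)) with (cs / a i)
      by (unfold cs, optimal_level; field; repeat split; lra).
    unfold Rdiv. ring.
Qed.

(* At the optimum [x_i e^(-b x_i) = phi_term / (b c)], which sums to [1 / c = theta z_0]. *)
Lemma moment_identity_at_optimum th m x : 0 < th -> is_mI a th m ->
  (forall b, 0 < b -> minimizerI a b (x b)) ->
  let bs := sI a m + dI a m * ln (optimal_level th m) in
  ex_series (fun j => x bs (j + 1)%nat * exp (- bs * x bs (j + 1)%nat)) /\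
  Series (fun j => x bs (j + 1)%nat * exp (- bs * x bs (j + 1)%nat))
    = th * Series (fun j => exp (- bs * x bs (j + 1)%nat)).
Proof.
  intros Hth Hm Hmin bs.
  destruct (f_strict_min th m Hth Hm) as [Hbs [Hcand [HPsi _]]]. fold bs in Hbs, Hcand.
  destruct (minimizer_at_optimum th m x Hth Hm Hmin) as [_ [_ Hx]]. fold bs in Hx.
  set (cs := optimal_level th m) in *. pose proof Hcand as [Hcs0 [Pcs Zcs]].
  set (g := fun i => x bs i * exp (- bs * x bs i)).
  assert (Eterm : forall i, (2 <= i)%nat -> g i = / (bs * cs) * phi_term a cs i).
  { intros i Hi. unfold g. rewrite Hx by lia.
    destruct (level_point_terms cs bs i Hbs Hi) as [T1 _]. rewrite T1.
    replace (level_point a cs bs i * zeta_term a cs i) with (/ bs * (level a cs i * zeta_term a cs i))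
      by (rewrite <- (level_point_scaled a cs bs i) by (lia || lra); field; lra).
    rewrite level_mul_zeta_term by (try apply a_pos; lia || lra). field. lra. }
  assert (Ex2 : ex_tail g 2).
  { apply (ex_series_ext (fun j => / (bs * cs) * phi_term a cs (2 + j)));
      [intros; symmetry; apply Eterm; lia|].
    apply (ex_series_scal_l _ _ (ex_tail_phi cs 2 Hcs0 ltac:(lia))). }
  assert (Ex1 : ex_tail g 1) by (apply (ex_series_incr_1 (fun j => g (1 + j)%nat)); auto).
  split; [apply (ex_series_of_tail1 g); auto|].
  change (Series (fun j => g (j + 1)%nat) = th * Series (fun j => exp (- bs * x bs (j + 1)%nat))).
  rewrite (Series_shift1 g), Tail_first by auto.
  unfold g at 1. rewrite Hx, Rmult_0_l, Rplus_0_l by lia.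
  rewrite (Tail_ext_loc _ (fun i => / (bs * cs) * phi_term a cs i)), Tail_scal
    by (intros; apply Eterm; auto).
  fold (Phi cs). rewrite Pcs.
  destruct (obj_level_point bs cs Hbs Hcs0) as [_ So].
  rewrite (Series_ext _ (objI_terms bs (level_point a cs bs)))
    by (intros; unfold objI_terms; rewrite Hx by lia; auto).
  rewrite So. unfold Psi in HPsi.
  replace (1 + Zeta cs) with (1 / (th * cs))
    by (apply Rmult_eq_reg_l with cs; [rewrite HPsi; field|]; lra).
  field. split; lra.
Qed.

End InfiniteSequence.
End Infinite.

Theorem lemma5 :
  (* (i) finite n *)
  (forall (n : nat) (a : nat -> R) (theta : R) (x : R -> nat -> R) (m mt : nat),
    (2 <= n)%nat ->
    (forall i, (1 <= i <= n)%nat -> 0 < a i) ->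
    (forall i, (1 <= i < n)%nat -> a (i + 1)%nat <= a i) ->
    sum_n_m a 1 n <= 1 ->
    (forall b, 0 < b -> minimizerF n a b (x b)) ->
    0 < theta ->
    is_mF n a theta m ->
    is_mtilde n a mt ->
    let f := fF n a theta in
    (forall b, 0 <= b -> 0 < f b) /\
    convex_on (fun b => 0 <= b) f /\
    (forall b, 0 < b -> ex_derive f b) /\
    (forall b, 0 < b -> continuous (Derive f) b) /\
    filterlim (fun h => (f h - f 0) / h) (at_right 0)
      (locally (theta - 1 / (a n * INR n))) /\
    filterlim (Derive f) (at_right 0) (locally (theta - 1 / (a n * INR n))) /\
    f 0 = ln (INR n) /\
    filterlim f (Rbar_locally p_infty) (Rbar_locally p_infty) /\
    (exists bs : R,
      0 <= bs /\
      (forall b, 0 <= b -> f bs <= f b) /\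
      (forall b, 0 <= b -> f b = f bs -> b = bs) /\
      (a n * INR n >= 1 / theta -> bs = 0 /\ f bs = ln (INR n)) /\
      (a n * INR n < 1 / theta ->
         bs = sF n a m + dF n a m * ln ((1 - theta * dF n a m) / (theta * INR m)) /\
         f bs = bs * theta + ln (INR m / (1 - dF n a m * theta)) /\
         (forall i, (1 <= i <= m)%nat -> x bs i = 0) /\
         (forall i, (m < i <= n)%nat ->
            x bs i = 1 / bs * ln ((1 - theta * dF n a m) / (a i * theta * INR m))))) /\
    (a n * INR n >= 1 / theta ->
      (forall i, (1 <= i <= mt)%nat ->
         filterlim (fun b => x b i) (at_right 0) (locally 0)) /\
      (forall i, (mt < i <= n)%nat ->
         filterlim (fun b => x b i) (at_right 0)
           (locally (1 / (a n * INR (n - mt)))))))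
  /\
  (* (ii) n = +oo *)
  (forall (a : nat -> R) (theta : R) (x : R -> nat -> R) (m : nat),
    (forall i, (1 <= i)%nat -> 0 < a i) ->
    (forall i, (1 <= i)%nat -> a (i + 1)%nat <= a i) ->
    ex_series (fun j => a (j + 1)%nat) ->
    Series (fun j => a (j + 1)%nat) <= 1 ->
    ex_series (fun j => eta (a (j + 1)%nat)) ->
    (forall b, 0 < b -> minimizerI a b (x b)) ->
    0 < theta ->
    is_mI a theta m ->
    let f := fI a theta in
    let bs := sI a m + dI a m * ln ((1 - theta * dI a m) / (theta * INR m)) in
    (forall b, 0 < b -> 0 < f b) /\
    convex_on (fun b => 0 < b) f /\
    (forall b, 0 < b -> ex_derive f b) /\
    (forall b, 0 < b -> continuous (Derive f) b) /\
    filterlim f (at_right 0) (Rbar_locally p_infty) /\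
    filterlim (Derive f) (at_right 0) (Rbar_locally m_infty) /\
    filterlim f (Rbar_locally p_infty) (Rbar_locally p_infty) /\
    0 < bs /\
    (forall b, 0 < b -> f bs <= f b) /\
    (forall b, 0 < b -> f b = f bs -> b = bs) /\
    f bs = theta * sI a m + eta (1 - theta * dI a m)
           + (1 - theta * dI a m) * ln (INR m) + dI a m * eta theta /\
    (forall i, (1 <= i <= m)%nat -> x bs i = 0) /\
    (forall i, (m < i)%nat ->
       x bs i = 1 / bs * ln ((1 - theta * dI a m) / (a i * theta * INR m))) /\
    ex_series (fun j => x bs (j + 1)%nat * exp (- bs * x bs (j + 1)%nat)) /\
    Series (fun j => x bs (j + 1)%nat * exp (- bs * x bs (j + 1)%nat))
      = theta * Series (fun j => exp (- bs * x bs (j + 1)%nat))).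
Proof.
  split.
  - intros n a theta x m mt Hn Hpos Hmono _ Hmin Hth Hm Hmt f.
    split; [intros b Hb; apply Finite.f_pos; auto|].
    split; [apply Finite.f_convex; auto|].
    split; [intros b Hb; exists (Derive f b); apply is_derive_Reals, Finite.Derive_f_spec; auto|].
    split; [intros b Hb; apply continuity_pt_filterlim, Finite.Derive_f_continuous; auto|].
    split; [apply filterlim_at_right_of_right_limit, Finite.f_right_derivative_at0; auto|].
    split; [apply filterlim_at_right_of_right_limit, Finite.Derive_f_right_limit_at0; auto|].
    split; [apply Finite.f_at0|].
    split; [apply Finite.f_to_p_infty; auto|].
    split; [apply Finite.f_minimum; auto|].
    intros _. apply Finite.minimizer_limits_at0; auto.
  - intros a theta x m Hpos Hmono Hsum Hsum1 Heta Hmin Hth Hm f bs.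
    destruct (Infinite.f_strict_min a Hpos Hmono Hsum Hsum1 Heta theta m Hth Hm) as [Hbs [_ [_ Hstrict]]].
    destruct (Infinite.minimizer_at_optimum a Hpos Hmono Hsum Hsum1 Heta theta m x Hth Hm Hmin)
      as [Hx_low [Hx_high _]].
    split; [intros b Hb; apply Infinite.f_pos; auto|].
    split; [apply Infinite.f_convex; auto|].
    split; [intros b Hb; exists (Derive f b); apply is_derive_Reals, Infinite.Derive_f_spec; auto|].
    split; [intros b Hb; apply continuity_pt_filterlim, Infinite.Derive_f_continuous; auto|].
    split; [apply Infinite.f_to_p_infty_at0; auto|].
    split; [apply Infinite.Derive_f_to_m_infty_at0; auto|].
    split; [apply Infinite.f_to_p_infty; auto|].
    split; [exact Hbs|].
    split; [apply (strict_min_le (fun b => 0 < b)); exact Hstrict|].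
    split; [apply (strict_min_unique (fun b => 0 < b)); exact Hstrict|].
    split; [apply Infinite.f_at_optimum; auto|].
    split; [exact Hx_low|]. split; [exact Hx_high|].
    apply Infinite.moment_identity_at_optimum; auto.
Qed.
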